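(* Let $M\subseteq H\subseteq F\subseteq\omega$ be $\Pi^1_1$ sets. Then there exists a computable function $g$ such that for every $p\in\omega$, $g(p)$ is an $\iota$-index of a c.e. effective quasi-Polish space $X=\iota(g(p))$ such that: $X$ is metrizable if $p\in M$; $X$ is Hausdorff but not metrizable if $p\in H\setminus M$; $X$ is $T_1$ but not Hausdorff if $p\in F\setminus H$; and $X$ is not $T_1$ if $p\notin F$.
   Context: Let $(W_n)$ be a standard numbering of c.e. subsets of $\omega$, $V_n=\{(i,j)\mid\langle i,j\rangle\in W_n\}$, and $t$ a computable function with $V_{t(n)}$ the transitive closure of $V_n$. For a transitive relation $\prec$ on $\omega$, an ideal is a non-empty lower, directed subset of $\omega$; $\mathcal{I}(\prec)$ is the space of ideals with topology generated by $[k]_\prec=\{I\mid k\in I\}$, an effective space with basic opens numbered by $k$. The numbering $\iota$ is defined by $\iota(n)=\mathcal{I}(V_{t(n)})$; an $\iota$-index of $X$ is an $n$ with $X=\iota(n)$. Every $\iota(n)$ is an effective quasi-Polish space; it is c.e. (overt) if $\{k\mid[k]_{V_{t(n)}}\neq\emptyset\}$ is c.e. *)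

From Stdlib Require Import Arith List Relations Reals.
Import ListNotations.

Definition cpair (x y : nat) : nat := (x + y) * (x + y + 1) / 2 + y.

Fixpoint seq_code (s : list nat) : nat :=
  match s with
  | [] => 0
  | x :: s' => S (cpair x (seq_code s'))
  end.

Definition restr (f : nat -> nat) (n : nat) : list nat := map f (seq 0 n).

Inductive recf : Type :=
| RZero : recf
| RSucc : recf
| RProj : nat -> recf
| RComp : recf -> list recf -> recf
| RPrec : recf -> recf -> recf
| RMin  : recf -> recf.

Inductive eval : recf -> list nat -> nat -> Prop :=
| ev_zero : forall v, eval RZero v 0
| ev_succ : forall v, eval RSucc v (S (hd 0 v))
| ev_proj : forall i v, eval (RProj i) v (nth i v 0)
| ev_comp : forall f gs v ys y,
    evals gs v ys -> eval f ys y -> eval (RComp f gs) v y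
| ev_prec0 : forall f g v y, eval f v y -> eval (RPrec f g) (0 :: v) y
| ev_precS : forall f g n v z y,
    eval (RPrec f g) (n :: v) z -> eval g (n :: z :: v) y ->
    eval (RPrec f g) (S n :: v) y
| ev_min : forall f v n,
    eval f (n :: v) 0 ->
    (forall m, m < n -> exists k, eval f (m :: v) (S k)) ->
    eval (RMin f) v n
with evals : list recf -> list nat -> list nat -> Prop :=
| evs_nil : forall v, evals [] v []
| evs_cons : forall g gs v y ys,
    eval g v y -> evals gs v ys -> evals (g :: gs) v (y :: ys).

Fixpoint enc (f : recf) : nat :=
  match f with
  | RZero => cpair 0 0
  | RSucc => cpair 1 0
  | RProj i => cpair 2 i
  | RComp f gs =>
      cpair 3 (cpair (enc f)
        ((fix encl (l : list recf) : nat :=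
            match l with [] => 0 | g :: l' => S (cpair (enc g) (encl l')) end) gs))
  | RPrec f g => cpair 4 (cpair (enc f) (enc g))
  | RMin f => cpair 5 (enc f)
  end.

(* phi_n(args) = y ; indices not coding a program give the empty function *)
Definition phi (n : nat) (args : list nat) (y : nat) : Prop :=
  exists c, enc c = n /\ eval c args y.

Definition W (n : nat) (x : nat) : Prop := exists y, phi n [x] y.

Definition computable (g : nat -> nat) : Prop :=
  exists e, forall p, phi e [p] (g p).

(* Pi^1_1 subsets of omega (Kleene normal form):
   A p <-> forall f, exists n, R(p, f|n), with R a computable (total) relation *)
Definition Pi11 (A : nat -> Prop) : Prop :=
  exists e,
    (forall p s, exists b, phi e [p; s] b) /\
    (forall p, A p <-> forall f : nat -> nat, exists n, phi e [p; seq_code (restr f n)] 0).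

Definition V (n : nat) (i j : nat) : Prop := W n (cpair i j).

Definition Vt (n : nat) : nat -> nat -> Prop := clos_trans nat (V n).

Definition is_ideal (R : nat -> nat -> Prop) (I : nat -> Prop) : Prop :=
  (exists k, I k) /\
  (forall i j, I j -> R i j -> I i) /\
  (forall i j, I i -> I j -> exists k, I k /\ R i k /\ R j k).

Definition same (I J : nat -> Prop) : Prop := forall k, I k <-> J k.

(* open sets of the topology on I(R) generated by the sets [k] = {I | k in I}:
   every point of U has a finite intersection of generators around it inside U *)
Definition is_open (R : nat -> nat -> Prop) (U : (nat -> Prop) -> Prop) : Prop :=
  forall I, is_ideal R I -> U I ->
    exists l : list nat, Forall I l /\
      (forall J, is_ideal R J -> Forall J l -> U J).

Definition T1 (R : nat -> nat -> Prop) : Prop :=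
  forall I J, is_ideal R I -> is_ideal R J -> ~ same I J ->
    exists U, is_open R U /\ U I /\ ~ U J.

Definition Hausdorff (R : nat -> nat -> Prop) : Prop :=
  forall I J, is_ideal R I -> is_ideal R J -> ~ same I J ->
    exists U U', is_open R U /\ is_open R U' /\ U I /\ U' J /\
      (forall K, is_ideal R K -> ~ (U K /\ U' K)).

Definition metrizable (R : nat -> nat -> Prop) : Prop :=
  exists d : (nat -> Prop) -> (nat -> Prop) -> Rdefinitions.R,
    (forall I J, is_ideal R I -> is_ideal R J ->
       (0 <= d I J)%R /\ (d I J = 0%R <-> same I J) /\ d I J = d J I) /\
    (forall I J K, is_ideal R I -> is_ideal R J -> is_ideal R K ->
       (d I K <= d I J + d J K)%R) /\
    (forall U, is_open R U <->
       (forall I, is_ideal R I -> U I ->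
          exists eps, (0 < eps)%R /\
            forall J, is_ideal R J -> (d I J < eps)%R -> U J)).

Definition ce_space (R : nat -> nat -> Prop) : Prop :=
  exists e, forall k, W e k <-> exists I, is_ideal R I /\ I k.

(* iota(n) = I(V_{t(n)}); the space is represented by its relation *)
Definition iota (n : nat) : nat -> nat -> Prop := Vt n.

(* Kleene's normal form makes every Pi^1_1 set A the set of those p for which a tree T_p,
   computable uniformly in p, has no infinite path; the paths of T_p are exactly the ideals of
   the strict prefix order restricted to T_p.  The space for p is the ideal space of one
   decidable transitive relation built from the trees of M, H and F at p:
   - a copy of the F-tree lies below isolated points (6,t) and below one point apex; the
     ideal of a path is then strictly contained in the principal ideal of apex, so T1 fails;
   - two copies of the H-tree lie below isolated points (3,t); the two ideals of a path
     cannot be separated by open sets, so Hausdorffness fails;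
   - for t in the M-tree, isolated points (0,t,m) converge to the ideal {(1,t,k)}, and a
     copy of the M-tree lies below the points (0,t,m); along a path these limits come
     arbitrarily close to the ideal of the path without entering its neighbourhoods, so no
     metric induces the topology.
   Conversely, without a path in the F-tree no ideal contains another; without paths in the
   F- and H-trees, distinct ideals contain incompatible elements; and without any path the
   isolated points together with the points (1,t,k) separate ideals, so the distance
   1/(n+1), n the first of them on which two ideals differ, induces the topology.  Because
   M <= H <= F, these cases are exactly the four of the theorem. *)

From Stdlib Require Import Arith Lia List Classical ClassicalEpsilon FunctionalExtensionality
  PropExtensionality Relations Reals Lra.
Import ListNotations.

(** * Cantor pairing *)

Fixpoint triangular (n : nat) : nat := match n with 0 => 0 | S n' => triangular n' + n end.

Lemma triangular_double n : n * (n + 1) = triangular n * 2.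
Proof. induction n; simpl; [reflexivity|]. nia. Qed.

Lemma cpair_triangular x y : cpair x y = triangular (x + y) + y.
Proof. unfold cpair. rewrite triangular_double, Nat.div_mul by lia. reflexivity. Qed.

Lemma triangular_mono a b : a <= b -> triangular a <= triangular b.
Proof. induction 1; simpl; lia. Qed.

(* [cdiag z] is the index [x + y] of the diagonal on which [z = cpair x y] lies. *)
Fixpoint cdiag (z : nat) : nat :=
  match z with
  | 0 => 0
  | S z' => if triangular (S (cdiag z')) <=? S z' then S (cdiag z') else cdiag z'
  end.

Lemma cdiag_spec z : triangular (cdiag z) <= z < triangular (S (cdiag z)).
Proof.
  induction z; simpl; [lia|].
  destruct (Nat.leb_spec (triangular (cdiag z) + S (cdiag z)) (S z)); simpl in *; lia.
Qed.

Lemma cdiag_unique d z : triangular d <= z < triangular (S d) -> cdiag z = d.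
Proof.
  intros Hd. destruct (cdiag_spec z) as [H3 H4].
  destruct (Nat.lt_trichotomy (cdiag z) d) as [H|[H|H]]; auto.
  - assert (triangular (S (cdiag z)) <= triangular d) by (apply triangular_mono; lia). lia.
  - assert (triangular (S d) <= triangular (cdiag z)) by (apply triangular_mono; lia). lia.
Qed.

Definition csnd (z : nat) : nat := z - triangular (cdiag z).
Definition cfst (z : nat) : nat := cdiag z - csnd z.

Lemma cdiag_cpair x y : cdiag (cpair x y) = x + y.
Proof. rewrite cpair_triangular. apply cdiag_unique; simpl; lia. Qed.

Lemma csnd_cpair x y : csnd (cpair x y) = y.
Proof. unfold csnd. rewrite cdiag_cpair, cpair_triangular. lia. Qed.

Lemma cfst_cpair x y : cfst (cpair x y) = x.
Proof. unfold cfst. rewrite csnd_cpair, cdiag_cpair. lia. Qed.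

Lemma cpair_cfst_csnd z : cpair (cfst z) (csnd z) = z.
Proof.
  destruct (cdiag_spec z) as [H1 H2]. simpl in H2.
  rewrite cpair_triangular. unfold cfst, csnd.
  replace (cdiag z - (z - triangular (cdiag z)) + (z - triangular (cdiag z))) with (cdiag z) by lia.
  lia.
Qed.

Lemma cpair_inj x y x' y' : cpair x y = cpair x' y' -> x = x' /\ y = y'.
Proof.
  intro H. split.
  - rewrite <- (cfst_cpair x y), <- (cfst_cpair x' y'). now rewrite H.
  - rewrite <- (csnd_cpair x y), <- (csnd_cpair x' y'). now rewrite H.
Qed.

Lemma cpair_ge_r x y : y <= cpair x y.
Proof. rewrite cpair_triangular. lia. Qed.

Lemma cpair_le_l x y x' : x <= x' -> cpair x y <= cpair x' y.
Proof.
  intro. rewrite !cpair_triangular.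
  assert (triangular (x + y) <= triangular (x' + y)) by (apply triangular_mono; lia). lia.
Qed.

Lemma cpair_lt_l x y x' : x < x' -> cpair x y < cpair x' y.
Proof.
  intro. rewrite !cpair_triangular.
  assert (triangular (S (x + y)) <= triangular (x' + y)) by (apply triangular_mono; lia).
  simpl in *. lia.
Qed.

Lemma cpair_lt_r x y y' : y < y' -> cpair x y < cpair x y'.
Proof.
  intro. rewrite !cpair_triangular.
  assert (triangular (x + y) <= triangular (x + y')) by (apply triangular_mono; lia). lia.
Qed.

Lemma cpair_le_r x y y' : y <= y' -> cpair x y <= cpair x y'.
Proof.
  intro. rewrite !cpair_triangular.
  assert (triangular (x + y) <= triangular (x + y')) by (apply triangular_mono; lia). lia.
Qed.

(** * Trees of finite sequences *)

(* Nodes of the full tree of finite sequences: [0] is the root and [S (cpair x s)] is the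
   child of [s] labelled [x]; the node of a sequence [l] is thus [seq_code (rev l)]. *)
Definition parent (t : nat) : nat := csnd (pred t).
Definition last_label (t : nat) : nat := cfst (pred t).
Definition iter_parent (k t : nat) : nat := Nat.iter k parent t.

Inductive prefix_lt : nat -> nat -> Prop :=
| prefix_lt_child : forall x s, prefix_lt s (S (cpair x s))
| prefix_lt_childS : forall x s t, prefix_lt s t -> prefix_lt s (S (cpair x t)).

Definition prefix_le (s t : nat) : Prop := s = t \/ prefix_lt s t.

Lemma prefix_lt_lt s t : prefix_lt s t -> s < t.
Proof.
  induction 1; [pose proof (cpair_ge_r x s)|pose proof (cpair_ge_r x t)]; lia.
Qed.

Lemma prefix_lt_irrefl s : ~ prefix_lt s s.
Proof. intro H. apply prefix_lt_lt in H. lia. Qed.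

Lemma prefix_le_le s t : prefix_le s t -> s <= t.
Proof. intros [->|H]; [lia|apply prefix_lt_lt in H; lia]. Qed.

Lemma prefix_le_refl s : prefix_le s s.
Proof. left; reflexivity. Qed.

Lemma prefix_lt_le s t : prefix_lt s t -> prefix_le s t.
Proof. right; assumption. Qed.

Lemma prefix_lt_trans a b c : prefix_lt a b -> prefix_lt b c -> prefix_lt a c.
Proof. intros H1 H2. induction H2; constructor; auto. Qed.

Lemma prefix_lt_le_trans a b c : prefix_lt a b -> prefix_le b c -> prefix_lt a c.
Proof. intros H [<-|H']; [exact H|eapply prefix_lt_trans; eauto]. Qed.

Lemma prefix_le_lt_trans a b c : prefix_le a b -> prefix_lt b c -> prefix_lt a c.
Proof. intros [->|H] H'; [exact H'|eapply prefix_lt_trans; eauto]. Qed.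

Lemma prefix_le_trans a b c : prefix_le a b -> prefix_le b c -> prefix_le a c.
Proof. intros [->|H1] H2; [exact H2|right; eapply prefix_lt_le_trans; eauto]. Qed.

Lemma prefix_lt_child_inv s x t : prefix_lt s (S (cpair x t)) -> prefix_le s t.
Proof.
  intro H. inversion H; subst;
    match goal with E : cpair _ _ = cpair _ _ |- _ => apply cpair_inj in E as [_ ->] end;
    [left; reflexivity|right; assumption].
Qed.

Lemma node_parent t : t <> 0 -> t = S (cpair (last_label t) (parent t)).
Proof. intro. unfold last_label, parent. rewrite cpair_cfst_csnd. lia. Qed.

Lemma prefix_lt_parent t : t <> 0 -> prefix_lt (parent t) t.
Proof. intro H. rewrite (node_parent t H) at 2. apply prefix_lt_child. Qed.

Lemma prefix_le_root t : prefix_le 0 t.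
Proof.
  induction t as [t IH] using (well_founded_induction lt_wf).
  destruct (Nat.eq_dec t 0) as [->|H]; [apply prefix_le_refl|].
  pose proof (prefix_lt_parent t H) as Hp.
  eapply prefix_le_trans; [apply IH, prefix_lt_lt, Hp|right; exact Hp].
Qed.

Lemma prefix_lt_iff_parent s t : prefix_lt s t <-> t <> 0 /\ prefix_le s (parent t).
Proof.
  split.
  - intro H. destruct t; [inversion H|]. split; [lia|].
    rewrite (node_parent (S t)) in H by lia. exact (prefix_lt_child_inv _ _ _ H).
  - intros [H1 H2]. exact (prefix_le_lt_trans _ _ _ H2 (prefix_lt_parent t H1)).
Qed.

Lemma prefix_le_iter_parent s t : prefix_le s t <-> exists k, k <= t /\ iter_parent k t = s.
Proof.
  split.
  - intros [->|H]; [exists 0; split; [lia|reflexivity]|].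
    induction H as [x s|x s t H [k [Hk Hk']]].
    + exists 1. split; [lia|]. unfold iter_parent, parent; cbn [Nat.iter pred]. apply csnd_cpair.
    + exists (S k). split.
      * pose proof (cpair_ge_r x t). lia.
      * unfold iter_parent in *. rewrite Nat.iter_succ_r.
        unfold parent at 2. cbn [pred]. rewrite csnd_cpair. exact Hk'.
  - intros [k [_ <-]]. induction k as [|k IH] in t |- *; [apply prefix_le_refl|].
    unfold iter_parent. rewrite Nat.iter_succ_r. fold (iter_parent k (parent t)).
    eapply prefix_le_trans; [apply IH|].
    destruct (Nat.eq_dec t 0) as [->|H]; [apply prefix_le_refl|right; apply prefix_lt_parent, H].
Qed.

Lemma prefix_le_chain a b t : prefix_le a t -> prefix_le b t -> prefix_le a b \/ prefix_le b a.
Proof.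
  intros Ha Hb. induction t as [t IH] using (well_founded_induction lt_wf).
  destruct Ha as [->|Ha]; [right; exact Hb|].
  destruct Hb as [->|Hb]; [left; right; exact Ha|].
  apply prefix_lt_iff_parent in Ha as [Ht Ha]. apply prefix_lt_iff_parent in Hb as [_ Hb].
  exact (IH _ (prefix_lt_lt _ _ (prefix_lt_parent t Ht)) Ha Hb).
Qed.

Lemma prefix_lt_child_le s t : prefix_lt s t -> exists x, prefix_le (S (cpair x s)) t.
Proof.
  induction 1 as [x s|x s t _ [y Hy]]; [exists x; apply prefix_le_refl|].
  exists y. eapply prefix_le_trans; [exact Hy|right; apply prefix_lt_child].
Qed.

(* [rev_code] turns the node of a sequence back into the [seq_code] of the sequence,
   reversing it one element per [rev_step]. *)
Definition rev_step (z : nat) : nat :=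
  if cfst z =? 0 then z
  else cpair (parent (cfst z)) (S (cpair (last_label (cfst z)) (csnd z))).
Definition rev_code (t : nat) : nat := csnd (Nat.iter t rev_step (cpair t 0)).

Lemma seq_code_length l : length l <= seq_code l.
Proof. induction l; simpl; [lia|]. pose proof (cpair_ge_r a (seq_code l)). lia. Qed.

Lemma rev_step_nil b : rev_step (cpair 0 b) = cpair 0 b.
Proof. unfold rev_step. rewrite cfst_cpair. reflexivity. Qed.

Lemma rev_step_cons x a b : rev_step (cpair (S (cpair x a)) b) = cpair a (S (cpair x b)).
Proof.
  unfold rev_step. rewrite cfst_cpair. cbn [Nat.eqb]. unfold parent, last_label. cbn [pred].
  rewrite csnd_cpair, cfst_cpair, csnd_cpair. reflexivity.
Qed.

Lemma iter_rev_step A B k : length A <= k ->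
  Nat.iter k rev_step (cpair (seq_code A) (seq_code B)) = cpair 0 (seq_code (rev A ++ B)).
Proof.
  induction k as [|k IH] in A, B |- *; intro H.
  - destruct A; [reflexivity|simpl in H; lia].
  - rewrite Nat.iter_succ_r. destruct A as [|x A].
    + cbn [seq_code]. rewrite rev_step_nil. apply (IH [] B). simpl; lia.
    + cbn [seq_code]. rewrite rev_step_cons.
      change (S (cpair x (seq_code B))) with (seq_code (x :: B)).
      rewrite IH by (simpl in H; lia). simpl. rewrite <- app_assoc. reflexivity.
Qed.

Lemma rev_code_rev l : rev_code (seq_code (rev l)) = seq_code l.
Proof.
  unfold rev_code.
  change (cpair (seq_code (rev l)) 0) with (cpair (seq_code (rev l)) (seq_code [])).
  rewrite iter_rev_step by apply seq_code_length.
  rewrite csnd_cpair, rev_involutive, app_nil_r. reflexivity.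
Qed.

Definition in_tree (a : nat -> nat) (t : nat) : Prop :=
  forall s, prefix_le s t -> a (rev_code s) <> 0.

Definition tree_lt (a : nat -> nat) (s t : nat) : Prop :=
  prefix_lt s t /\ in_tree a s /\ in_tree a t.

(* The ideals of [tree_lt a] are exactly the infinite paths through the tree of [a]. *)
Definition no_path (a : nat -> nat) : Prop := ~ exists B, is_ideal (tree_lt a) B.

Definition kleene_wf (a : nat -> nat) : Prop :=
  forall f : nat -> nat, exists n, a (seq_code (restr f n)) = 0.

Lemma in_tree_prefix_le a s t : prefix_le s t -> in_tree a t -> in_tree a s.
Proof. intros H1 H2 r Hr. apply H2. eapply prefix_le_trans; eauto. Qed.

Lemma in_tree_prefix_lt a s t : prefix_lt s t -> in_tree a t -> in_tree a s.
Proof. intro H. apply in_tree_prefix_le. right; exact H. Qed.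

Definition branch (f : nat -> nat) (n : nat) : nat := seq_code (rev (restr f n)).

Lemma branch_S f n : branch f (S n) = S (cpair (f n) (branch f n)).
Proof. unfold branch, restr. rewrite seq_S, map_app, rev_app_distr. reflexivity. Qed.

Lemma prefix_le_branch f n s : prefix_le s (branch f n) -> exists m, s = branch f m.
Proof.
  induction n as [|n IH]; intros [->|H].
  - exists 0; reflexivity.
  - inversion H.
  - eexists; reflexivity.
  - rewrite branch_S in H. exact (IH (prefix_lt_child_inv _ _ _ H)).
Qed.

Lemma prefix_lt_branch f n m : n < m -> prefix_lt (branch f n) (branch f m).
Proof. induction 1; rewrite branch_S; constructor; auto. Qed.

Section PathIdeal.

Variables (a : nat -> nat) (B : nat -> Prop).
Hypothesis HB : is_ideal (tree_lt a) B.

Lemma path_in_tree s : B s -> in_tree a s.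
Proof.
  intro Hs. destruct HB as [_ [_ Hdir]].
  destruct (Hdir s s Hs Hs) as [k [_ [[_ [H _]] _]]]. exact H.
Qed.

Lemma path_child s : B s -> exists x, B (S (cpair x s)).
Proof.
  intro Hs. destruct HB as [_ [Hlow Hdir]].
  destruct (Hdir s s Hs Hs) as [k [Hk [[Hp [_ Ha]] _]]].
  destruct (prefix_lt_child_le _ _ Hp) as [x [Hx|Hx]]; exists x; [rewrite Hx; exact Hk|].
  apply (Hlow _ k Hk). repeat split; auto. exact (in_tree_prefix_lt _ _ _ Hx Ha).
Qed.

Lemma path_root : B 0.
Proof.
  destruct HB as [[s Hs] [Hlow _]].
  destruct (prefix_le_root s) as [<-|Hp]; [exact Hs|].
  apply (Hlow 0 s Hs). pose proof (path_in_tree s Hs) as Ha.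
  repeat split; auto. exact (in_tree_prefix_lt _ _ _ Hp Ha).
Qed.

Lemma path_branch : exists f, forall n, B (branch f n).
Proof.
  assert (Hc : forall s, exists x, B s -> B (S (cpair x s))).
  { intro s. destruct (classic (B s)) as [Hs|Hs].
    - destruct (path_child s Hs) as [x Hx]; exists x; auto.
    - exists 0; tauto. }
  destruct (choice _ Hc) as [h Hh].
  set (g := fix g n := match n with 0 => 0 | S n => S (cpair (h (g n)) (g n)) end).
  exists (fun n => h (g n)).
  assert (Hg : forall n, g n = branch (fun n => h (g n)) n /\ B (g n)).
  { induction n as [|n [E Hn]]; [split; [reflexivity|exact path_root]|].
    rewrite branch_S, <- E. split; [reflexivity|exact (Hh _ Hn)]. }
  intro n. destruct (Hg n) as [<- Hn]. exact Hn.
Qed.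

End PathIdeal.

Lemma kleene_wf_no_path a : kleene_wf a -> no_path a.
Proof.
  intros Hwf [B HB]. destruct (path_branch a B HB) as [f Hf].
  destruct (Hwf f) as [n Hn].
  apply (path_in_tree a B HB _ (Hf n) _ (prefix_le_refl _)).
  unfold branch. rewrite rev_code_rev. exact Hn.
Qed.

Lemma no_path_kleene_wf a : no_path a -> kleene_wf a.
Proof.
  intros HN f. apply NNPP. intro Hn.
  assert (Hal : forall n, in_tree a (branch f n)).
  { intros n s Hs. destruct (prefix_le_branch f n s Hs) as [m ->].
    unfold branch. rewrite rev_code_rev. intro Hz. apply Hn. exists m. exact Hz. }
  apply HN. exists (fun s => exists n, s = branch f n). split; [|split].
  - exists (branch f 0), 0; reflexivity.
  - intros i j [n ->] [Hp _]. exact (prefix_le_branch f n i (prefix_lt_le _ _ Hp)).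
  - intros i j [n ->] [m ->]. exists (branch f (S (max n m))). split; [eexists; reflexivity|].
    split; (split; [apply prefix_lt_branch; lia|split; apply Hal]).
Qed.

Lemma kleene_wf_iff_no_path a : kleene_wf a <-> no_path a.
Proof. split; [apply kleene_wf_no_path|apply no_path_kleene_wf]. Qed.

(** * Ideal spaces *)

Section IdealSpace.

Variable R : nat -> nat -> Prop.
Hypothesis R_trans : transitive nat R.

Lemma ideal_inhabited I : is_ideal R I -> exists k, I k.
Proof. intros [H _]; exact H. Qed.

Lemma ideal_lower I i j : is_ideal R I -> I j -> R i j -> I i.
Proof. intros [_ [H _]]; eauto. Qed.

Lemma ideal_directed I i j : is_ideal R I -> I i -> I j -> exists k, I k /\ R i k /\ R j k.
Proof. intros [_ [_ H]]; eauto. Qed.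

Lemma ideal_upper I x : is_ideal R I -> I x -> exists y, I y /\ R x y.
Proof. intros HI Hx. destruct (ideal_directed I x x HI Hx Hx) as [k [? [? _]]]; eauto. Qed.

Lemma ideal_upper_list I l : is_ideal R I -> Forall I l ->
  exists a, I a /\ Forall (fun x => R x a) l.
Proof.
  intros HI. induction l as [|x l IH]; intro Hl.
  - destruct (ideal_inhabited I HI) as [k Hk]. exists k; auto.
  - inversion Hl as [|? ? Hx Hl']; subst. destruct (IH Hl') as [a [Ha Hla]].
    destruct (ideal_directed I x a HI Hx Ha) as [c [Hc [Hxc Hac]]].
    exists c. split; [exact Hc|]. constructor; [exact Hxc|].
    eapply Forall_impl; [|exact Hla]. intros y Hy. exact (R_trans _ _ _ Hy Hac).
Qed.

Lemma open_basic_nbhd U I : is_open R U -> is_ideal R I -> U I ->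
  exists a, I a /\ forall J, is_ideal R J -> J a -> U J.
Proof.
  intros HU HI HUI. destruct (HU I HI HUI) as [l [Hl HlU]].
  destruct (ideal_upper_list I l HI Hl) as [a [Ha Hla]].
  exists a. split; auto. intros J HJ HJa. apply HlU; auto.
  eapply Forall_impl; [|exact Hla]. intros y Hy. eapply ideal_lower; eauto.
Qed.

Lemma basic_open a : is_open R (fun J => J a).
Proof.
  intros I _ Ha. exists [a]. split; [constructor; auto|]. intros J _ HJ. inversion HJ; auto.
Qed.

Lemma open_upward U I J : is_open R U -> is_ideal R I -> is_ideal R J -> U I ->
  (forall k, I k -> J k) -> U J.
Proof.
  intros HU HI HJ HUI Hs. destruct (HU I HI HUI) as [l [Hl HlU]]. apply HlU; auto.
  eapply Forall_impl; [|exact Hl]. auto.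
Qed.

Lemma principal_ideal e : R e e -> is_ideal R (fun z => R z e).
Proof.
  intros He. split; [exists e; auto|split].
  - intros i j Hj Hij. eapply R_trans; eauto.
  - intros i j Hi Hj. exists e; auto.
Qed.

Lemma ideal_maximal I e : (forall y, R e y -> y = e) -> is_ideal R I -> I e ->
  forall z, I z <-> R z e.
Proof.
  intros Htop HI He z. split.
  - intro Hz. destruct (ideal_directed I z e HI Hz He) as [c [_ [H1 H2]]].
    apply Htop in H2. subst; auto.
  - intro H. eapply ideal_lower; eauto.
Qed.

Lemma ideal_unbounded I : is_ideal R I -> (forall x, I x -> ~ R x x) ->
  (forall x y, R x y -> ~ R y y -> x < y) -> forall n, exists x, I x /\ n <= x.
Proof.
  intros HI Hl Hm n. induction n as [|n [x [Hx Hn]]].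
  - destruct (ideal_inhabited I HI) as [k Hk]. exists k; split; auto; lia.
  - destruct (ideal_upper I x HI Hx) as [y [Hy Hxy]].
    exists y. split; auto. specialize (Hm x y Hxy (Hl y Hy)). lia.
Qed.

Lemma T1_of_witness :
  (forall I J, is_ideal R I -> is_ideal R J -> ~ same I J -> exists a, I a /\ ~ J a) -> T1 R.
Proof.
  intros H I J HI HJ Hs. destruct (H I J HI HJ Hs) as [a [Ha Hna]].
  exists (fun K => K a). split; [apply basic_open|auto].
Qed.

Definition incompatible_in (I J : nat -> Prop) : Prop :=
  exists a b, I a /\ J b /\ ~ exists c, R a c /\ R b c.

Lemma incompatible_in_sym I J : incompatible_in I J -> incompatible_in J I.
Proof.
  intros [a [b [Ha [Hb Hn]]]]. exists b, a. repeat split; auto.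
  intros [c [H1 H2]]; apply Hn; eauto.
Qed.

Lemma Hausdorff_of_incompatible :
  (forall I J, is_ideal R I -> is_ideal R J -> ~ same I J -> incompatible_in I J) -> Hausdorff R.
Proof.
  intros H I J HI HJ Hs. destruct (H I J HI HJ Hs) as [a [b [Ha [Hb Hn]]]].
  exists (fun K => K a), (fun K => K b).
  repeat split; auto using basic_open. intros K HK [Ka Kb]. apply Hn.
  destruct (ideal_directed K a b HK Ka Kb) as [c [_ ?]]. eauto.
Qed.

Lemma not_T1_of_subset I J : is_ideal R I -> is_ideal R J ->
  (forall k, I k -> J k) -> ~ same I J -> ~ T1 R.
Proof.
  intros HI HJ Hs Hn HT. destruct (HT I J HI HJ Hn) as [U [HU [HUI HUJ]]].
  exact (HUJ (open_upward U I J HU HI HJ HUI Hs)).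
Qed.

Lemma not_Hausdorff_of_joinable I J : is_ideal R I -> is_ideal R J -> ~ same I J ->
  (forall a b, I a -> J b -> exists K, is_ideal R K /\ K a /\ K b) -> ~ Hausdorff R.
Proof.
  intros HI HJ Hn Hc HH. destruct (HH I J HI HJ Hn) as [U [U' [HU [HU' [HUI [HUJ Hd]]]]]].
  destruct (open_basic_nbhd U I HU HI HUI) as [a [Ha Ha']].
  destruct (open_basic_nbhd U' J HU' HJ HUJ) as [b [Hb Hb']].
  destruct (Hc a b Ha Hb) as [K [HK [Ka Kb]]]. exact (Hd K HK (conj (Ha' K HK Ka) (Hb' K HK Kb))).
Qed.

End IdealSpace.

Lemma ex_least (P : nat -> Prop) : (exists n, P n) -> exists n, P n /\ forall m, m < n -> ~ P m.
Proof.
  intros [n Hn]. induction n as [n IH] using (well_founded_induction lt_wf).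
  destruct (classic (exists m, m < n /\ P m)) as [[m [Hm Hpm]]|Hno].
  - exact (IH m Hm Hpm).
  - exists n. split; auto. intros m Hm Hp. apply Hno; eauto.
Qed.

Definition inv_succ (n : nat) : R := / INR (S n).

Lemma inv_succ_pos n : (0 < inv_succ n)%R.
Proof. unfold inv_succ. apply Rinv_0_lt_compat, lt_0_INR; lia. Qed.

Lemma inv_succ_lt n m : n < m -> (inv_succ m < inv_succ n)%R.
Proof.
  intro H. unfold inv_succ. apply Rinv_lt_contravar.
  - apply Rmult_lt_0_compat; apply lt_0_INR; lia.
  - apply lt_INR; lia.
Qed.

Lemma inv_succ_le n m : n <= m -> (inv_succ m <= inv_succ n)%R.
Proof.
  intro H. destruct (Nat.eq_dec n m); [subst; lra|]. left; apply inv_succ_lt; lia.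
Qed.

Section TestDistance.

Variable T : nat -> Prop.

Definition differ_at (I J : nat -> Prop) (n : nat) : Prop := T n /\ ~ (I n <-> J n).

(* The ultrametric [1/(n+1)], [n] the least test element on which [I] and [J] differ. *)
Definition test_dist (I J : nat -> Prop) : R :=
  match excluded_middle_informative (exists n, differ_at I J n) with
  | left H => inv_succ (proj1_sig (constructive_indefinite_description _ (ex_least _ H)))
  | right _ => 0%R
  end.

Lemma test_dist_cases I J :
  ((~ exists n, differ_at I J n) /\ test_dist I J = 0%R) \/
  (exists m, differ_at I J m /\ (forall k, k < m -> ~ differ_at I J k) /\
     test_dist I J = inv_succ m).
Proof.
  unfold test_dist. destruct (excluded_middle_informative _) as [H|H]; [right|left; auto].
  destruct (constructive_indefinite_description _ _) as [m [Hm1 Hm2]]; simpl.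
  exists m; auto.
Qed.

Lemma test_dist_lt I J n :
  (test_dist I J < inv_succ n)%R <-> forall k, k <= n -> T k -> (I k <-> J k).
Proof.
  destruct (test_dist_cases I J) as [[Hn ->]|[m [Hm [Hmin ->]]]].
  - split; [|intros; apply inv_succ_pos]. intros _ k _ Tk. apply NNPP. intro Hk.
    apply Hn. exists k. split; auto.
  - split.
    + intros Hlt k Hk Tk. apply NNPP. intro Hd.
      assert (m <= k)
        by (destruct (le_lt_dec m k); auto; exfalso; apply (Hmin k); auto; split; auto).
      pose proof (inv_succ_le m n ltac:(lia)). lra.
    + intros Hag. destruct (le_lt_dec m n) as [Hle|Hlt].
      * exfalso. destruct Hm as [Tm Hd]. exact (Hd (Hag m Hle Tm)).
      * apply inv_succ_lt; auto.
Qed.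

Lemma test_dist_ge I J n : differ_at I J n -> (inv_succ n <= test_dist I J)%R.
Proof.
  intros [Tn Hn]. destruct (Rlt_le_dec (test_dist I J) (inv_succ n)) as [H|H]; auto.
  rewrite test_dist_lt in H. exfalso. exact (Hn (H n (le_n n) Tn)).
Qed.

Lemma test_dist_nonneg I J : (0 <= test_dist I J)%R.
Proof.
  destruct (test_dist_cases I J) as [[_ ->]|[m [_ [_ ->]]]]; [lra|left; apply inv_succ_pos].
Qed.

Lemma test_dist_sym I J : test_dist I J = test_dist J I.
Proof.
  assert (Hs : forall n, differ_at I J n <-> differ_at J I n) by (unfold differ_at; intuition).
  destruct (test_dist_cases I J) as [[Hn ->]|[m [Hm [Hmin ->]]]];
  destruct (test_dist_cases J I) as [[Hn' ->]|[m' [Hm' [Hmin' ->]]]]; auto.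
  - exfalso; apply Hn; exists m'; apply Hs; auto.
  - exfalso; apply Hn'; exists m; apply Hs; auto.
  - f_equal. destruct (Nat.lt_trichotomy m m') as [H|[H|H]]; auto; exfalso.
    + apply (Hmin' m H), Hs, Hm.
    + apply (Hmin m' H), Hs, Hm'.
Qed.

Lemma test_dist_triangle I J K : (test_dist I K <= test_dist I J + test_dist J K)%R.
Proof.
  pose proof (test_dist_nonneg I J). pose proof (test_dist_nonneg J K).
  destruct (test_dist_cases I K) as [[_ ->]|[m [[Tm Hm] [_ ->]]]]; [lra|].
  destruct (classic (I m <-> J m)) as [H1|H1].
  - assert (Hd : differ_at J K m) by (split; auto; intro; apply Hm; tauto).
    pose proof (test_dist_ge _ _ _ Hd). lra.
  - assert (Hd : differ_at I J m) by (split; auto).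
    pose proof (test_dist_ge _ _ _ Hd). lra.
Qed.

Variable R : nat -> nat -> Prop.
Hypothesis R_trans : transitive nat R.
Hypothesis test_below : forall I k, is_ideal R I -> I k ->
  exists a, T a /\ I a /\ forall J, is_ideal R J -> J a -> J k.
Hypothesis test_apart : forall I k, is_ideal R I -> T k -> ~ I k ->
  exists a, I a /\ forall J, is_ideal R J -> J a -> ~ J k.

Lemma same_of_test_agree I J : is_ideal R I -> is_ideal R J ->
  (forall n, T n -> (I n <-> J n)) -> same I J.
Proof.
  intros HI HJ Hag k. split; intro Hk.
  - destruct (test_below I k HI Hk) as [a [Ta [Ia Ha]]]. apply Ha; [exact HJ|apply Hag; auto].
  - destruct (test_below J k HJ Hk) as [a [Ta [Ja Ha]]]. apply Ha; [exact HI|apply Hag; auto].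
Qed.

Lemma test_dist_eq0 I J : is_ideal R I -> is_ideal R J -> (test_dist I J = 0%R <-> same I J).
Proof.
  intros HI HJ. destruct (test_dist_cases I J) as [[Hn ->]|[m [[_ Hm] [_ ->]]]]; split; intro H.
  - apply same_of_test_agree; auto.
    intros n Tn. apply NNPP. intro Hd. apply Hn. exists n. split; auto.
  - reflexivity.
  - pose proof (inv_succ_pos m). lra.
  - exfalso. exact (Hm (H m)).
Qed.

Lemma open_has_ball U I : is_open R U -> is_ideal R I -> U I ->
  exists eps, (0 < eps)%R /\ forall J, is_ideal R J -> (test_dist I J < eps)%R -> U J.
Proof.
  intros HU HI HUI. destruct (open_basic_nbhd R R_trans U I HU HI HUI) as [a [Ia Ha]].
  destruct (test_below I a HI Ia) as [b [Tb [Ib Hb]]].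
  exists (inv_succ b). split; [apply inv_succ_pos|].
  intros J HJ Hd. apply Ha, Hb; auto. rewrite test_dist_lt in Hd. apply (Hd b); auto.
Qed.

Lemma agreement_nbhd_at I k : is_ideal R I ->
  exists l, Forall I l /\ forall J, is_ideal R J -> Forall J l -> T k -> (I k <-> J k).
Proof.
  intro HI. destruct (classic (I k)) as [Ik|Ik].
  - exists [k]. split; [constructor; auto|]. intros J _ Hl _. inversion Hl; tauto.
  - destruct (classic (T k)) as [Tk|Tk]; [|exists []; split; auto; tauto].
    destruct (test_apart I k HI Tk Ik) as [a [Ia Ha]]. exists [a]. split; [constructor; auto|].
    intros J HJ Hl _. inversion Hl. specialize (Ha J HJ). tauto.
Qed.

Lemma agreement_nbhd I n : is_ideal R I ->
  exists l, Forall I l /\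
    forall J, is_ideal R J -> Forall J l -> forall k, k <= n -> T k -> (I k <-> J k).
Proof.
  intro HI. induction n as [|n [l [Hl Hl']]].
  - destruct (agreement_nbhd_at I 0 HI) as [l [Hl Hl']]. exists l. split; auto.
    intros J HJ HJl k Hk. replace k with 0 by lia. auto.
  - destruct (agreement_nbhd_at I (S n) HI) as [l0 [Hl0 Hl0']].
    exists (l0 ++ l). split; [apply Forall_app; auto|].
    intros J HJ HJl k Hk. apply Forall_app in HJl as [HJl0 HJl].
    destruct (Nat.eq_dec k (S n)) as [->|Hne]; [auto|apply Hl'; auto; lia].
Qed.

Lemma open_of_balls U :
  (forall I, is_ideal R I -> U I -> exists eps, (0 < eps)%R /\
     forall J, is_ideal R J -> (test_dist I J < eps)%R -> U J) -> is_open R U.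
Proof.
  intros HU I HI HUI. destruct (HU I HI HUI) as [eps [Heps Hball]].
  destruct (archimed_cor1 eps Heps) as [N [HN HN0]].
  destruct (agreement_nbhd I N HI) as [l [Hl Hl']]. exists l. split; auto.
  intros J HJ HJl. apply Hball; auto.
  assert (test_dist I J < inv_succ N)%R by (apply test_dist_lt, Hl'; auto).
  assert (inv_succ N < / INR N)%R
    by (apply Rinv_lt_contravar; [apply Rmult_lt_0_compat; apply lt_0_INR| apply lt_INR]; lia).
  lra.
Qed.

Lemma metrizable_of_tests : metrizable R.
Proof.
  exists test_dist. split; [|split].
  - intros I J HI HJ. split; [apply test_dist_nonneg|].
    split; [apply test_dist_eq0; auto|apply test_dist_sym].
  - intros I J K _ _ _. apply test_dist_triangle.
  - intro U. split; [intros HU I; apply open_has_ball; auto|apply open_of_balls].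
Qed.

End TestDistance.

(** * The gadget space *)

Definition pt (tag s m : nat) : nat := cpair tag (cpair s m).
Definition tag (x : nat) : nat := cfst x.
Definition node (x : nat) : nat := cfst (csnd x).
Definition idx (x : nat) : nat := csnd (csnd x).

Lemma pt_inj t s m t' s' m' : pt t s m = pt t' s' m' -> t = t' /\ s = s' /\ m = m'.
Proof.
  unfold pt. intro H. apply cpair_inj in H as [-> H]. apply cpair_inj in H as [-> ->]. auto.
Qed.

Lemma pt_lt_idx t s m m' : m < m' -> pt t s m < pt t s m'.
Proof. intro. unfold pt. apply cpair_lt_r, cpair_lt_r; auto. Qed.

Lemma pt_lt_node t s s' m : s < s' -> pt t s m < pt t s' m.
Proof. intro. unfold pt. apply cpair_lt_r, cpair_lt_l; auto. Qed.

Lemma pt_le_idx t s m m' : m <= m' -> pt t s m <= pt t s m'.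
Proof. intro. unfold pt. apply cpair_le_r, cpair_le_r; auto. Qed.

Lemma pt_le_node t s s' m : s <= s' -> pt t s m <= pt t s' m.
Proof. intro. unfold pt. apply cpair_le_r, cpair_le_l; auto. Qed.

Lemma pt_ge_idx t s m : m <= pt t s m.
Proof.
  unfold pt. pose proof (cpair_ge_r s m). pose proof (cpair_ge_r t (cpair s m)). lia.
Qed.

Lemma pt_tag_node_idx x : pt (tag x) (node x) (idx x) = x.
Proof. unfold pt, tag, node, idx. rewrite !cpair_cfst_csnd. reflexivity. Qed.

Lemma tag_pt t s m : tag (pt t s m) = t.
Proof. apply cfst_cpair. Qed.

Lemma node_pt t s m : node (pt t s m) = s.
Proof. unfold node, pt. rewrite csnd_cpair. apply cfst_cpair. Qed.

Lemma idx_pt t s m : idx (pt t s m) = m.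
Proof. unfold idx, pt. rewrite !csnd_cpair. reflexivity. Qed.

Global Opaque pt.

Definition apex : nat := pt 8 0 0.

Section Gadget.

Variables aM aH aF : nat -> nat.

(* Tags: 0 and 1 form, for each node s of the tree of [aM], a sequence of isolated points
   (0,s,m) converging to the ideal {(1,s,k)}; 2 is a copy of that tree placed below the
   points (0,t,m).  Tags 3, 4, 5 put two copies of the tree of [aH] below isolated points
   (3,t), and tags 6, 7 a copy of the tree of [aF] below isolated points (6,t) and below
   one point [apex]. *)
Inductive gadget : nat -> nat -> Prop :=
| g_top0 : forall s m, in_tree aM s -> gadget (pt 0 s m) (pt 0 s m)
| g_seq : forall s k k', in_tree aM s -> k < k' -> gadget (pt 1 s k) (pt 1 s k')
| g_seq_top : forall s k m, in_tree aM s -> k <= m -> gadget (pt 1 s k) (pt 0 s m)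
| g_copyM : forall s t, in_tree aM t -> prefix_lt s t -> gadget (pt 2 s 0) (pt 2 t 0)
| g_copyM_top : forall s t m, in_tree aM t -> prefix_le s t -> gadget (pt 2 s 0) (pt 0 t m)
| g_top3 : forall s, in_tree aH s -> gadget (pt 3 s 0) (pt 3 s 0)
| g_copyH : forall i s t, (i = 4 \/ i = 5) -> in_tree aH t -> prefix_lt s t ->
    gadget (pt i s 0) (pt i t 0)
| g_copyH_top : forall i s t, (i = 4 \/ i = 5) -> in_tree aH t -> prefix_le s t ->
    gadget (pt i s 0) (pt 3 t 0)
| g_top6 : forall s, in_tree aF s -> gadget (pt 6 s 0) (pt 6 s 0)
| g_copyF : forall s t, in_tree aF t -> prefix_lt s t -> gadget (pt 7 s 0) (pt 7 t 0)
| g_copyF_top : forall s t, in_tree aF t -> prefix_le s t -> gadget (pt 7 s 0) (pt 6 t 0)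
| g_copyF_apex : forall s, in_tree aF s -> gadget (pt 7 s 0) apex
| g_apex : gadget apex apex.

Ltac pt_inj_all := repeat match goal with H : pt _ _ _ = pt _ _ _ |- _ =>
  apply pt_inj in H; destruct H as [? [? ?]]; subst end.

Ltac no_prefix_loop := try match goal with H : prefix_lt ?s ?s |- _ =>
  exfalso; exact (prefix_lt_irrefl s H) end.

Ltac invert_gadget H := inversion H; subst; unfold apex in *; pt_inj_all;
  try discriminate; try (exfalso; lia); no_prefix_loop.

Ltac refl_gadget := first [apply g_top0; assumption | apply g_top3; assumption
  | apply g_top6; assumption | apply g_apex].

#[local] Hint Resolve in_tree_prefix_le in_tree_prefix_lt prefix_lt_le prefix_lt_le_trans
  prefix_le_lt_trans prefix_le_refl prefix_le_trans : tree.

Lemma gadget_trans : transitive nat gadget.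
Proof.
  intros x y z H1 H2.
  inversion H1; subst; inversion H2; subst; unfold apex in *; pt_inj_all;
    try discriminate; try (exfalso; lia); solve [econstructor; eauto with tree arith].
Qed.

Lemma gadget_refl_maximal e y : gadget e e -> gadget e y -> y = e.
Proof. intros H1 H2. inversion H1; subst; no_prefix_loop; invert_gadget H2; auto. Qed.

Lemma gadget_lt x y : gadget x y -> ~ gadget y y -> x < y.
Proof.
  intros H Hn. inversion H; subst; try (exfalso; apply Hn; refl_gadget; eauto with tree; fail).
  - apply pt_lt_idx; auto.
  - apply pt_lt_node, prefix_lt_lt; auto.
  - apply pt_lt_node, prefix_lt_lt; auto.
  - apply pt_lt_node, prefix_lt_lt; auto.
Qed.

Lemma gadget_refl_above x y : gadget x y -> exists e, gadget x e /\ gadget e e.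
Proof.
  intro H. inversion H; subst;
    [ exists (pt 0 s m) | exists (pt 0 s k') | exists (pt 0 s m) | exists (pt 0 t 0)
    | exists (pt 0 t m) | exists (pt 3 s 0) | exists (pt 3 t 0) | exists (pt 3 t 0)
    | exists (pt 6 s 0) | exists (pt 6 t 0) | exists (pt 6 t 0) | exists apex | exists apex ];
    split; solve [econstructor; eauto with tree arith].
Qed.

Definition kind (x : nat) : nat * nat := (tag x, if tag x =? 1 then node x else 0).

Lemma kind_pt t s m : kind (pt t s m) = (t, if t =? 1 then s else 0).
Proof. unfold kind. rewrite tag_pt, node_pt. reflexivity. Qed.

Lemma gadget_kind x y : gadget x y -> ~ gadget y y -> kind x = kind y.
Proof.
  intros H Hn. inversion H; subst;
    try (exfalso; apply Hn; refl_gadget; eauto with tree; fail);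
    rewrite !kind_pt; try reflexivity.
  match goal with Hi : _ \/ _ |- _ => destruct Hi as [-> | ->]; reflexivity end.
Qed.

Lemma gadget_chain a b c : gadget a c -> gadget b c -> kind a = kind b ->
  ~ gadget a a -> ~ gadget b b -> c <> apex ->
  a = b \/ gadget a b \/ gadget b a.
Proof.
  intros Ha Hb Hk Hna Hnb Hc.
  inversion Ha; subst; try (exfalso; apply Hna; refl_gadget; fail).
  all: inversion Hb; subst; unfold apex in *; pt_inj_all; try (exfalso; lia); no_prefix_loop.
  all: try (exfalso; apply Hnb; refl_gadget; fail); try (exfalso; apply Hc; reflexivity).
  all: rewrite ?kind_pt in Hk; cbn [Nat.eqb] in Hk;
    try (injection Hk; intros; subst); try (exfalso; lia).
  all: try (destruct (lt_eq_lt_dec k k0) as [[h|h]|h];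
    [right; left; apply g_seq| left; subst; reflexivity| right; right; apply g_seq]; auto; fail).
  all: repeat match goal with H : prefix_lt ?x ?y |- _ => apply prefix_lt_le in H end.
  all: match goal with H1 : prefix_le ?r ?t, H2 : prefix_le ?r' ?t |- _ =>
         destruct (prefix_le_chain r r' t H1 H2) as [[<-|h]|[<-|h]] end; try (left; reflexivity).
  all: solve [ right; left; econstructor; eauto with tree
             | right; right; econstructor; eauto with tree ].
Qed.

Ltac bound_below := first [ lia
  | match goal with H : ?k <= ?m |- pt 1 ?s ?k <= _ => pose proof (pt_le_idx 1 s k m H); lia end
  | match goal with H : prefix_le ?a ?b, H' : ?i = 4 \/ ?i = 5 |- _ =>
      pose proof (pt_le_node i a b 0 (prefix_le_le _ _ H)); destruct H' as [-> | ->]; lia end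
  | match goal with H : prefix_le ?a ?b |- pt ?t _ _ <= _ =>
      pose proof (pt_le_node t a b 0 (prefix_le_le _ _ H)); lia end ].

Lemma gadget_finite_below e : gadget e e -> e <> apex ->
  exists n, forall z, gadget z e -> z <= n.
Proof.
  intros He Hw. invert_gadget He; try (exfalso; apply Hw; reflexivity).
  - exists (pt 0 s m + pt 1 s m + pt 2 s 0). intros z Hz. invert_gadget Hz; bound_below.
  - exists (pt 3 s 0 + pt 4 s 0 + pt 5 s 0). intros z Hz. invert_gadget Hz; bound_below.
  - exists (pt 6 s 0 + pt 7 s 0). intros z Hz. invert_gadget Hz; bound_below.
Qed.

Definition seq_ideal (s : nat) (x : nat) : Prop := exists k, x = pt 1 s k.

Lemma seq_ideal_ideal s : in_tree aM s -> is_ideal gadget (seq_ideal s).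
Proof.
  intro Ha. split; [|split].
  - exists (pt 1 s 0), 0; reflexivity.
  - intros i j [k ->] H. invert_gadget H. eexists; reflexivity.
  - intros i j [k ->] [k' ->]. exists (pt 1 s (S (max k k'))). split; [eexists; reflexivity|].
    split; apply g_seq; auto; lia.
Qed.

Lemma gadget_above_seq s k c : gadget (pt 1 s k) c -> exists t m, c = pt t s m /\ (t = 0 \/ t = 1).
Proof. intro H. invert_gadget H; eauto. Qed.

Definition tree_copy (i : nat) (B : nat -> Prop) (x : nat) : Prop := exists s, B s /\ x = pt i s 0.

Record copies_tree (a : nat -> nat) (i : nat) : Prop := {
  copy_up : forall s t, tree_lt a s t -> gadget (pt i s 0) (pt i t 0);
  copy_down : forall x t, gadget x (pt i t 0) -> exists s, x = pt i s 0 /\ tree_lt a s t;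
  copy_up_nonrefl : forall s c, gadget (pt i s 0) c -> ~ gadget c c -> exists t, c = pt i t 0 }.

Lemma copies_treeM : copies_tree aM 2.
Proof.
  split.
  - intros s t [Hp [_ Ht]]. apply g_copyM; auto.
  - intros x t H. invert_gadget H. exists s. repeat split; eauto with tree.
  - intros s c H Hn. invert_gadget H; eauto. exfalso. apply Hn. refl_gadget.
Qed.

Lemma copies_treeH i : i = 4 \/ i = 5 -> copies_tree aH i.
Proof.
  intro Hi. split.
  - intros s t [Hp [_ Ht]]. apply g_copyH; auto.
  - intros x t H. destruct Hi; invert_gadget H; exists s; repeat split; eauto with tree.
  - intros s c H Hn. destruct Hi; invert_gadget H; eauto; exfalso; apply Hn; refl_gadget.
Qed.

Lemma copies_treeF : copies_tree aF 7.
Proof.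
  split.
  - intros s t [Hp [_ Ht]]. apply g_copyF; auto.
  - intros x t H. invert_gadget H. exists s. repeat split; eauto with tree.
  - intros s c H Hn. invert_gadget H; eauto; exfalso; apply Hn; refl_gadget.
Qed.

Lemma tree_copy_ideal a i B : copies_tree a i -> is_ideal (tree_lt a) B ->
  is_ideal gadget (tree_copy i B).
Proof.
  intros Hc HB. split; [|split].
  - destruct (ideal_inhabited _ B HB) as [s Hs]. exists (pt i s 0), s; auto.
  - intros x y [t [Ht ->]] H. destruct (copy_down _ _ Hc x t H) as [s [-> Hst]].
    exists s. split; [exact (ideal_lower _ B s t HB Ht Hst)|reflexivity].
  - intros x y [s [Hs ->]] [t [Ht ->]].
    destruct (ideal_directed _ B s t HB Hs Ht) as [c [Hc' [H1 H2]]].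
    exists (pt i c 0). split; [exists c; auto|]. split; apply (copy_up _ _ Hc); auto.
Qed.

Definition limit (I : nat -> Prop) : Prop := forall y, I y -> ~ gadget y y.

Lemma limit_tree_trace a i I s0 : copies_tree a i -> is_ideal gadget I -> limit I ->
  I (pt i s0 0) -> is_ideal (tree_lt a) (fun s => I (pt i s 0)).
Proof.
  intros Hc HI Hl H0. split; [exists s0; auto|split].
  - intros s t Ht Hst. exact (ideal_lower _ I _ _ HI Ht (copy_up _ _ Hc s t Hst)).
  - intros s s' Hs Hs'. destruct (ideal_directed _ I _ _ HI Hs Hs') as [c [Ic [H1 H2]]].
    destruct (copy_up_nonrefl _ _ Hc s c H1 (Hl c Ic)) as [t ->].
    destruct (copy_down _ _ Hc _ t H1) as [r [Er Hst]]. apply pt_inj in Er as [_ [<- _]].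
    destruct (copy_down _ _ Hc _ t H2) as [r [Er Hs't]]. apply pt_inj in Er as [_ [<- _]].
    exists t. auto.
Qed.

Lemma principal_of_refl I e : is_ideal gadget I -> I e -> gadget e e ->
  forall z, I z <-> gadget z e.
Proof.
  intros HI He Hr. apply ideal_maximal; auto. intros y Hy; exact (gadget_refl_maximal e y Hr Hy).
Qed.

Lemma refl_or_limit I : (exists e, I e /\ gadget e e) \/ limit I.
Proof.
  destruct (classic (exists e, I e /\ gadget e e)) as [H|H]; [left; exact H|right].
  intros y Iy Ry. apply H. eauto.
Qed.

Lemma limit_point_cases I x : is_ideal gadget I -> limit I -> I x ->
  (exists s k, x = pt 1 s k /\ in_tree aM s) \/ (exists s, x = pt 2 s 0) \/
  (exists s i, (i = 4 \/ i = 5) /\ x = pt i s 0) \/ (exists s, x = pt 7 s 0).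
Proof.
  intros HI Hl Hx. destruct (ideal_upper _ I x HI Hx) as [y [Hy Hxy]].
  pose proof (Hl x Hx) as Hn.
  inversion Hxy; subst; try (exfalso; apply Hn; refl_gadget; fail).
  all: first [ left; eauto; fail | right; left; eauto; fail
             | right; right; left; eauto; fail | right; right; right; eauto ].
Qed.

Lemma limit_kind I x y : is_ideal gadget I -> limit I -> I x -> I y -> kind x = kind y.
Proof.
  intros HI Hl Hx Hy. destruct (ideal_directed _ I x y HI Hx Hy) as [c [Hc [H1 H2]]].
  rewrite (gadget_kind _ _ H1 (Hl c Hc)), (gadget_kind _ _ H2 (Hl c Hc)). reflexivity.
Qed.

Lemma limit_unbounded I : is_ideal gadget I -> limit I -> forall n, exists x, I x /\ n <= x.
Proof. intros HI Hl. apply (ideal_unbounded _ I HI Hl gadget_lt). Qed.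

Lemma limit_seq_ideal I s k : is_ideal gadget I -> limit I -> I (pt 1 s k) ->
  forall x, I x <-> seq_ideal s x.
Proof.
  intros HI Hl Hk.
  assert (Hfw : forall x, I x -> seq_ideal s x).
  { intros x Hx. pose proof (limit_kind I _ _ HI Hl Hk Hx) as Hkd.
    destruct (limit_point_cases I x HI Hl Hx)
      as [[s' [k' [-> _]]]|[[s' ->]|[[s' [i [Hi ->]]]|[s' ->]]]];
      rewrite !kind_pt in Hkd; cbn [Nat.eqb] in Hkd.
    - injection Hkd as ->. exists k'; reflexivity.
    - discriminate.
    - destruct Hi as [-> | ->]; discriminate.
    - discriminate. }
  assert (Hs : in_tree aM s).
  { destruct (limit_point_cases I _ HI Hl Hk)
      as [[s' [k' [E Ha]]]|[[s' E]|[[s' [i [Hi E]]]|[s' E]]]];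
      apply pt_inj in E; try lia. destruct E as [_ [-> _]]; auto. }
  intro x. split; [apply Hfw|]. intros [k' ->].
  destruct (limit_unbounded I HI Hl (pt 1 s k')) as [z [Hz Hle]].
  destruct (Hfw z Hz) as [k'' ->].
  destruct (lt_eq_lt_dec k' k'') as [[h|<-]|h]; auto.
  - eapply ideal_lower; eauto. apply g_seq; auto.
  - pose proof (pt_lt_idx 1 s k'' k' h). lia.
Qed.

Lemma limit_point_cases_no_path I x : no_path aH -> no_path aF ->
  is_ideal gadget I -> limit I -> I x ->
  (exists s k, x = pt 1 s k) \/ (exists s, x = pt 2 s 0).
Proof.
  intros NH NF HI Hl Hx.
  destruct (limit_point_cases I x HI Hl Hx) as [[s [k [-> _]]]|[H|[[s [i [Hi ->]]]|[s ->]]]];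
    eauto; exfalso.
  - apply NH. eexists. exact (limit_tree_trace _ _ I s (copies_treeH i Hi) HI Hl Hx).
  - apply NF. eexists. exact (limit_tree_trace _ _ I s copies_treeF HI Hl Hx).
Qed.

Lemma limit_not_below_refl I e : no_path aF -> is_ideal gadget I -> limit I -> gadget e e ->
  ~ (forall x, I x -> gadget x e).
Proof.
  intros NF HI Hl He Hbelow.
  destruct (Nat.eq_dec e apex) as [->|Hw].
  - destruct (ideal_inhabited _ I HI) as [x Hx].
    pose proof (Hbelow x Hx) as Rx. invert_gadget Rx.
    + apply NF. eexists. exact (limit_tree_trace _ _ I s copies_treeF HI Hl Hx).
    + exact (Hl _ Hx g_apex).
  - destruct (gadget_finite_below e He Hw) as [n Hn].
    destruct (limit_unbounded I HI Hl (S n)) as [x [Hx Hxn]].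
    specialize (Hn x (Hbelow x Hx)). lia.
Qed.

Lemma limit_subset_eq I J : is_ideal gadget I -> is_ideal gadget J -> limit J ->
  (forall k, I k -> J k) -> forall k, J k -> I k.
Proof.
  intros HI HJ HlJ Hs x Hx.
  assert (HlI : limit I) by (intros y Hy; exact (HlJ y (Hs y Hy))).
  destruct (limit_unbounded I HI HlI x) as [y [Hy Hxy]].
  destruct (ideal_directed _ J x y HJ Hx (Hs y Hy)) as [c [Hc [H1 H2]]].
  assert (Hcw : c <> apex) by (intros ->; exact (HlJ _ Hc g_apex)).
  destruct (gadget_chain _ _ _ H1 H2 (limit_kind J _ _ HJ HlJ Hx (Hs y Hy))
              (HlJ x Hx) (HlJ y (Hs y Hy)) Hcw) as [->|[Hr|Hr]]; auto.
  - eapply ideal_lower; eauto.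
  - pose proof (gadget_lt _ _ Hr (HlJ x Hx)). lia.
Qed.

Lemma ideal_subset_eq I J : no_path aF -> is_ideal gadget I -> is_ideal gadget J ->
  (forall k, I k -> J k) -> forall k, J k -> I k.
Proof.
  intros NF HI HJ Hs.
  destruct (refl_or_limit J) as [[e [Je Re]]|HlJ]; [|exact (limit_subset_eq I J HI HJ HlJ Hs)].
  pose proof (principal_of_refl J e HJ Je Re) as HJe.
  destruct (classic (I e)) as [Ie|Ie].
  - intros k Hk. apply (principal_of_refl I e HI Ie Re), HJe, Hk.
  - exfalso. apply (limit_not_below_refl I e NF HI); auto.
    + intros y Hy Ry. apply Ie. rewrite (gadget_refl_maximal y e Ry (proj1 (HJe y) (Hs y Hy))).
      exact Hy.
    + intros x Hx. exact (proj1 (HJe x) (Hs x Hx)).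
Qed.

Theorem gadget_T1 : no_path aF -> T1 gadget.
Proof.
  intro NF. apply T1_of_witness. intros I J HI HJ Hs. apply NNPP. intro H.
  assert (Hsub : forall k, I k -> J k) by (intros k Ik; apply NNPP; intro; apply H; eauto).
  apply Hs. intro k. split; [apply Hsub|exact (ideal_subset_eq I J NF HI HJ Hsub k)].
Qed.

Lemma not_same_witness I J : no_path aF -> is_ideal gadget I -> is_ideal gadget J ->
  ~ same I J -> exists a, I a /\ ~ J a.
Proof.
  intros NF HI HJ Hs. apply NNPP. intro Hn.
  assert (Hsub : forall k, I k -> J k) by (intros k Ik; apply NNPP; intro; apply Hn; eauto).
  apply Hs. intro k. split; [apply Hsub|exact (ideal_subset_eq I J NF HI HJ Hsub k)].
Qed.

Lemma incompatible_of_refl I J e : no_path aF -> is_ideal gadget I -> is_ideal gadget J ->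
  ~ same I J -> I e -> gadget e e -> incompatible_in gadget I J.
Proof.
  intros NF HI HJ Hs Ie Re. pose proof (principal_of_refl I e HI Ie Re) as HIe.
  destruct (not_same_witness J I NF HJ HI) as [b [Jb Ib]].
  { intro H. apply Hs. intro k. symmetry. apply H. }
  exists e, b. repeat split; auto.
  intros [c [H1 H2]]. rewrite (gadget_refl_maximal e c Re H1) in H2. exact (Ib (proj2 (HIe b) H2)).
Qed.

Lemma incompatible_same_kind I J x y : no_path aF -> is_ideal gadget I -> is_ideal gadget J ->
  limit I -> limit J -> ~ same I J -> I x -> J y -> kind x = kind y ->
  incompatible_in gadget I J.
Proof.
  intros NF HI HJ HlI HlJ Hs Hx Hy Hk.
  destruct (not_same_witness I J NF HI HJ Hs) as [a [Ia Ja]].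
  destruct (not_same_witness J I NF HJ HI) as [b [Jb Ib]].
  { intro H. apply Hs. intro k. symmetry. apply H. }
  exists a, b. repeat split; auto. intros [c [H1 H2]].
  destruct (Nat.eq_dec c apex) as [->|Hcw].
  - invert_gadget H1.
    + apply NF. eexists. exact (limit_tree_trace _ _ I s copies_treeF HI HlI Ia).
    + exact (HlI _ Ia g_apex).
  - assert (Hab : kind a = kind b).
    { rewrite (limit_kind I a x HI HlI Ia Hx), Hk. exact (limit_kind J y b HJ HlJ Hy Jb). }
    destruct (gadget_chain _ _ _ H1 H2 Hab (HlI a Ia) (HlJ b Jb) Hcw) as [->|[Hr|Hr]].
    + exact (Ja Jb).
    + exact (Ja (ideal_lower _ J _ _ HJ Jb Hr)).
    + exact (Ib (ideal_lower _ I _ _ HI Ia Hr)).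
Qed.

(* [(1,s,k)] and any point [(2,r',0)] of [J] above [(2,s,0)] have no common upper bound. *)
Lemma incompatible_seq_copy I J s k r : no_path aH -> no_path aF ->
  is_ideal gadget J -> limit J -> I (pt 1 s k) -> J (pt 2 r 0) -> incompatible_in gadget I J.
Proof.
  intros NH NF HJ HlJ Hx Hy.
  destruct (limit_unbounded J HJ HlJ (S (pt 2 s 0))) as [z [Hz Hzl]].
  pose proof (limit_kind J _ _ HJ HlJ Hy Hz) as Hk.
  destruct (limit_point_cases_no_path J z NH NF HJ HlJ Hz) as [[s' [k' ->]]|[r' ->]].
  - rewrite !kind_pt in Hk. discriminate.
  - exists (pt 1 s k), (pt 2 r' 0). repeat split; auto.
    intros [c [H1 H4]]. destruct (gadget_above_seq _ _ _ H1) as [t [m [-> [-> | ->]]]];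
      invert_gadget H4.
    match goal with H : prefix_le r' s |- _ =>
      pose proof (pt_le_node 2 r' s 0 (prefix_le_le _ _ H)) end.
    lia.
Qed.

Theorem gadget_Hausdorff : no_path aH -> no_path aF -> Hausdorff gadget.
Proof.
  intros NH NF. apply Hausdorff_of_incompatible. intros I J HI HJ Hs.
  destruct (refl_or_limit I) as [[e [Ie Re]]|HlI].
  { exact (incompatible_of_refl I J e NF HI HJ Hs Ie Re). }
  destruct (refl_or_limit J) as [[e [Je Re]]|HlJ].
  { apply incompatible_in_sym. apply (incompatible_of_refl J I e NF HJ HI); auto.
    intro H; apply Hs. intro k; symmetry; apply H. }
  destruct (ideal_inhabited _ I HI) as [x Hx]. destruct (ideal_inhabited _ J HJ) as [y Hy].
  destruct (limit_point_cases_no_path I x NH NF HI HlI Hx) as [[s [k ->]]|[r ->]];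
  destruct (limit_point_cases_no_path J y NH NF HJ HlJ Hy) as [[s' [k' ->]]|[r' ->]].
  - destruct (Nat.eq_dec s s') as [<-|Hss].
    + apply (incompatible_same_kind I J _ _ NF HI HJ HlI HlJ Hs Hx Hy).
      rewrite !kind_pt. reflexivity.
    + exists (pt 1 s k), (pt 1 s' k'). repeat split; auto. intros [c [H1 H4]].
      destruct (gadget_above_seq _ _ _ H1) as [t [m [-> _]]].
      destruct (gadget_above_seq _ _ _ H4) as [t' [m' [E _]]]. apply pt_inj in E. lia.
  - exact (incompatible_seq_copy I J s k r' NH NF HJ HlJ Hx Hy).
  - apply incompatible_in_sym. exact (incompatible_seq_copy J I s' k' r NH NF HI HlI Hy Hx).
  - apply (incompatible_same_kind I J _ _ NF HI HJ HlI HlJ Hs Hx Hy). rewrite !kind_pt. reflexivity.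
Qed.

Theorem gadget_not_T1 : ~ no_path aF -> ~ T1 gadget.
Proof.
  intro H. apply NNPP in H. destruct H as [B HB].
  apply (not_T1_of_subset _ (tree_copy 7 B) (fun z => gadget z apex)).
  - exact (tree_copy_ideal _ _ B copies_treeF HB).
  - exact (principal_ideal _ gadget_trans apex g_apex).
  - intros k [s [Hs ->]]. exact (g_copyF_apex s (path_in_tree _ B HB s Hs)).
  - intro Hs. destruct (proj2 (Hs apex) g_apex) as [s [_ E]]. apply pt_inj in E. lia.
Qed.

Theorem gadget_not_Hausdorff : ~ no_path aH -> ~ Hausdorff gadget.
Proof.
  intro H. apply NNPP in H. destruct H as [B HB].
  destruct (ideal_inhabited _ B HB) as [s0 Hs0].
  apply (not_Hausdorff_of_joinable _ gadget_trans (tree_copy 4 B) (tree_copy 5 B)).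
  - exact (tree_copy_ideal _ _ B (copies_treeH 4 (or_introl eq_refl)) HB).
  - exact (tree_copy_ideal _ _ B (copies_treeH 5 (or_intror eq_refl)) HB).
  - intro Hs. destruct (proj1 (Hs (pt 4 s0 0)) (ex_intro _ s0 (conj Hs0 eq_refl))) as [s [_ E]].
    apply pt_inj in E. lia.
  - intros a b [s [Hs ->]] [t [Ht ->]].
    destruct (ideal_directed _ B s t HB Hs Ht) as [c [Hc [[H1 [_ H2]] [H3 _]]]].
    exists (fun z => gadget z (pt 3 c 0)).
    split; [apply principal_ideal, g_top3; auto using gadget_trans|].
    split; apply g_copyH_top; auto; right; auto.
Qed.

(* For a path [B] through the tree of [aM], the ideals [seq_ideal t] with [t] on [B] come
   arbitrarily close to [tree_copy 2 B], both being close to the isolated points (0,t,k),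
   yet they stay outside its neighbourhood [(2,s0)]. *)
Theorem gadget_not_metrizable : ~ no_path aM -> ~ metrizable gadget.
Proof.
  intros H [d [Hd1 [Hd2 Hd3]]]. apply NNPP in H. destruct H as [B HB].
  assert (Hball : forall X r, is_ideal gadget X -> (0 < r)%R ->
            exists a, X a /\ forall J, is_ideal gadget J -> J a -> (d X J < r)%R).
  { intros X r HX Hr. apply (open_basic_nbhd _ gadget_trans); auto.
    - apply Hd3. intros I HI HIr. exists (r - d X I)%R. split; [lra|].
      intros J HJ HJd. pose proof (Hd2 X I J HX HI HJ). lra.
    - replace (d X X) with 0%R; [exact Hr|]. symmetry. apply (Hd1 X X HX HX). intro; tauto. }
  pose proof (tree_copy_ideal _ _ B copies_treeM HB) as HU.
  destruct (ideal_inhabited _ B HB) as [s0 Hs0].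
  destruct (proj1 (Hd3 (fun K => K (pt 2 s0 0))) (basic_open _ _) (tree_copy 2 B) HU
              (ex_intro _ s0 (conj Hs0 eq_refl))) as [eps [Heps Hfar]].
  destruct (Hball (tree_copy 2 B) (eps / 2)%R HU ltac:(lra)) as [a [[s [Hs ->]] Ha]].
  destruct (ideal_upper _ B s HB Hs) as [t [Ht [Hp [_ Hal]]]].
  pose proof (seq_ideal_ideal t Hal) as HY.
  destruct (Hball (seq_ideal t) (eps / 2)%R HY ltac:(lra)) as [a' [[k ->] Ha']].
  assert (HZ : is_ideal gadget (fun z => gadget z (pt 0 t k)))
    by (apply principal_ideal; [exact gadget_trans|apply g_top0; auto]).
  pose proof (Ha _ HZ (g_copyM_top s t k Hal (or_intror Hp))) as D1.
  pose proof (Ha' _ HZ (g_seq_top t k k Hal (le_n k))) as D2.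
  pose proof (Hd2 _ _ _ HU HZ HY) as D3.
  destruct (Hd1 _ _ HY HZ) as [_ [_ D4]].
  destruct (Hfar _ HY ltac:(lra)) as [k' E]. apply pt_inj in E. lia.
Qed.

Definition test_point (x : nat) : Prop := ~ (tag x = 2 \/ tag x = 4 \/ tag x = 5 \/ tag x = 7).

Lemma refl_test_point e : gadget e e -> test_point e.
Proof.
  intro H. unfold test_point. invert_gadget H; rewrite tag_pt; lia.
Qed.

Lemma gadget_test_below I k : no_path aM -> no_path aH -> no_path aF ->
  is_ideal gadget I -> I k ->
  exists a, test_point a /\ I a /\ forall J, is_ideal gadget J -> J a -> J k.
Proof.
  intros NM NH NF HI Ik.
  destruct (refl_or_limit I) as [[e [Ie Re]]|Hl].
  - exists e. split; [exact (refl_test_point e Re)|]. split; auto.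
    intros J HJ Je. apply (principal_of_refl J e HJ Je Re), (principal_of_refl I e HI Ie Re), Ik.
  - destruct (limit_point_cases_no_path I k NH NF HI Hl Ik) as [[s [k' ->]]|[s ->]].
    + exists (pt 1 s k'). unfold test_point. rewrite tag_pt. split; [lia|]. auto.
    + exfalso. apply NM. eexists. exact (limit_tree_trace _ _ I s copies_treeM HI Hl Ik).
Qed.

Lemma gadget_test_apart I k : no_path aM -> no_path aH -> no_path aF ->
  is_ideal gadget I -> test_point k -> ~ I k ->
  exists a, I a /\ forall J, is_ideal gadget J -> J a -> ~ J k.
Proof.
  intros NM NH NF HI Tk nIk.
  destruct (refl_or_limit I) as [[e [Ie Re]]|Hl].
  { exists e. split; auto. intros J HJ Je Jk. apply nIk.
    apply (principal_of_refl I e HI Ie Re), (principal_of_refl J e HJ Je Re), Jk. }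
  destruct (ideal_inhabited _ I HI) as [x Hx].
  destruct (limit_point_cases_no_path I x NH NF HI Hl Hx) as [[s [k0 ->]]|[s ->]].
  2: { exfalso. apply NM. eexists. exact (limit_tree_trace _ _ I s copies_treeM HI Hl Hx). }
  pose proof (limit_seq_ideal I s k0 HI Hl Hx) as HY.
  exists (pt 1 s (S k)). split; [apply HY; eexists; reflexivity|].
  intros J HJ Ja Jk. destruct (ideal_directed _ J _ _ HJ Ja Jk) as [c [Hc [H1 H2]]].
  destruct (gadget_above_seq _ _ _ H1) as [t [m [-> [-> | ->]]]].
  - invert_gadget H1. invert_gadget H2.
    + pose proof (pt_ge_idx 0 s m). lia.
    + apply nIk, HY. eexists; reflexivity.
    + unfold test_point in Tk. rewrite tag_pt in Tk. lia.
  - invert_gadget H2. apply nIk, HY. eexists; reflexivity.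
Qed.

Theorem gadget_metrizable : no_path aM -> no_path aH -> no_path aF -> metrizable gadget.
Proof.
  intros NM NH NF. apply (metrizable_of_tests test_point gadget gadget_trans).
  - intros I k. exact (gadget_test_below I k NM NH NF).
  - intros I k. exact (gadget_test_apart I k NM NH NF).
Qed.

Lemma gadget_basic_nonempty k : (exists I, is_ideal gadget I /\ I k) <-> exists y, gadget k y.
Proof.
  split.
  - intros [I [HI Ik]]. destruct (ideal_upper _ I k HI Ik) as [y [_ H]]. eauto.
  - intros [y Hy]. destruct (gadget_refl_above _ _ Hy) as [e [H1 H2]].
    exists (fun z => gadget z e). split; auto. exact (principal_ideal _ gadget_trans e H2).
Qed.

End Gadget.

(** * Deciding the gadget relation *)

(* Predicates are decided by indicator functions: nonzero means true. *)
Definition ind_eq (a b : nat) : nat := 1 - ((a - b) + (b - a)).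
Definition ind_lt (a b : nat) : nat := 1 - (1 - (b - a)).
Definition ind_le (a b : nat) : nat := 1 - (a - b).

Lemma ind_eq_ne a b : ind_eq a b <> 0 <-> a = b. Proof. unfold ind_eq; lia. Qed.
Lemma ind_lt_ne a b : ind_lt a b <> 0 <-> a < b. Proof. unfold ind_lt; lia. Qed.
Lemma ind_le_ne a b : ind_le a b <> 0 <-> a <= b. Proof. unfold ind_le; lia. Qed.

Lemma add_ne a b : a + b <> 0 <-> a <> 0 \/ b <> 0.
Proof. lia. Qed.

Lemma mul_ne a b : a * b <> 0 <-> a <> 0 /\ b <> 0.
Proof. lia. Qed.

Lemma sg_ne a : 1 - (1 - a) <> 0 <-> a <> 0.
Proof. lia. Qed.

Fixpoint prod_below (n : nat) (f : nat -> nat) : nat :=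
  match n with 0 => 1 | S n => prod_below n f * f n end.

Lemma prod_below_ne n f : prod_below n f <> 0 <-> forall k, k < n -> f k <> 0.
Proof.
  induction n; simpl.
  - split; [intros; lia|lia].
  - rewrite mul_ne, IHn. split.
    + intros [H1 H2] k Hk. destruct (Nat.eq_dec k n); [subst; auto|apply H1; lia].
    + intros H; split; [intros; apply H; lia|apply H; lia].
Qed.

Lemma prod_below_le1 n f : (forall k, f k <= 1) -> prod_below n f <= 1.
Proof.
  intro Hf. induction n; cbn [prod_below]; [lia|].
  pose proof (Nat.mul_le_mono _ _ _ _ IHn (Hf n)). lia.
Qed.

Definition ind_in_tree (a : nat -> nat) (t : nat) : nat :=
  prod_below (S t) (fun k => 1 - (1 - a (rev_code (iter_parent k t)))).
Definition ind_prefix_le (s t : nat) : nat :=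
  1 - prod_below (S t) (fun k => 1 - ind_eq (iter_parent k t) s).
Definition ind_prefix_lt (s t : nat) : nat := (1 - (1 - t)) * ind_prefix_le s (parent t).

Lemma ind_in_tree_ne a t : ind_in_tree a t <> 0 <-> in_tree a t.
Proof.
  unfold ind_in_tree, in_tree. rewrite prod_below_ne. split.
  - intros H s Hs. apply prefix_le_iter_parent in Hs as [k [Hk <-]].
    specialize (H k ltac:(lia)). lia.
  - intros H k Hk. apply sg_ne, H, prefix_le_iter_parent. exists k; split; auto; lia.
Qed.

Lemma ind_prefix_le_ne s t : ind_prefix_le s t <> 0 <-> prefix_le s t.
Proof.
  unfold ind_prefix_le. rewrite prefix_le_iter_parent.
  set (P := prod_below (S t) (fun k => 1 - ind_eq (iter_parent k t) s)).
  assert (HP1 : P <= 1) by (apply prod_below_le1; intro; lia).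
  assert (HP : P <> 0 <-> ~ exists k, k <= t /\ iter_parent k t = s).
  { unfold P. rewrite prod_below_ne. split.
    - intros H [k [Hk E]]. apply (H k ltac:(lia)). apply ind_eq_ne in E. lia.
    - intros Hn k Hk E. apply Hn. exists k. split; [lia|]. apply ind_eq_ne. lia. }
  split.
  - intro H. apply NNPP. intro Hn. apply HP in Hn. lia.
  - intros Hex. destruct (Nat.eq_dec P 0) as [E|E]; [lia|]. exfalso. exact (proj1 HP E Hex).
Qed.

Lemma ind_prefix_lt_ne s t : ind_prefix_lt s t <> 0 <-> prefix_lt s t.
Proof.
  unfold ind_prefix_lt. rewrite mul_ne, sg_ne, ind_prefix_le_ne, prefix_lt_iff_parent. tauto.
Qed.

Section GadgetIndicator.

Variables aM aH aF : nat -> nat.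

Definition gadget_cases (t s m t' s' m' : nat) : Prop :=
  (t = 0 /\ t' = 0 /\ s = s' /\ m = m' /\ in_tree aM s) \/
  (t = 1 /\ t' = 1 /\ s = s' /\ m < m' /\ in_tree aM s) \/
  (t = 1 /\ t' = 0 /\ s = s' /\ m <= m' /\ in_tree aM s) \/
  (t = 2 /\ t' = 2 /\ m = 0 /\ m' = 0 /\ in_tree aM s' /\ prefix_lt s s') \/
  (t = 2 /\ t' = 0 /\ m = 0 /\ in_tree aM s' /\ prefix_le s s') \/
  (t = 3 /\ t' = 3 /\ s = s' /\ m = 0 /\ m' = 0 /\ in_tree aH s) \/
  ((t = 4 \/ t = 5) /\ t' = t /\ m = 0 /\ m' = 0 /\ in_tree aH s' /\ prefix_lt s s') \/
  ((t = 4 \/ t = 5) /\ t' = 3 /\ m = 0 /\ m' = 0 /\ in_tree aH s' /\ prefix_le s s') \/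
  (t = 6 /\ t' = 6 /\ s = s' /\ m = 0 /\ m' = 0 /\ in_tree aF s) \/
  (t = 7 /\ t' = 7 /\ m = 0 /\ m' = 0 /\ in_tree aF s' /\ prefix_lt s s') \/
  (t = 7 /\ t' = 6 /\ m = 0 /\ m' = 0 /\ in_tree aF s' /\ prefix_le s s') \/
  (t = 7 /\ t' = 8 /\ m = 0 /\ s' = 0 /\ m' = 0 /\ in_tree aF s) \/
  (t = 8 /\ s = 0 /\ m = 0 /\ t' = 8 /\ s' = 0 /\ m' = 0).

Lemma gadget_iff_cases x y :
  gadget aM aH aF x y <-> gadget_cases (tag x) (node x) (idx x) (tag y) (node y) (idx y).
Proof.
  split.
  - intro H. unfold gadget_cases.
    inversion H; subst; unfold apex; rewrite ?tag_pt, ?node_pt, ?idx_pt.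
    all: do 12 try (try (left; repeat split; auto; lia); right).
    all: repeat split.
  - intro H. rewrite <- (pt_tag_node_idx x), <- (pt_tag_node_idx y). revert H.
    generalize (tag x) (node x) (idx x) (tag y) (node y) (idx y). intros t s m t' s' m' H.
    unfold gadget_cases in H.
    repeat match goal with H : _ \/ _ |- _ => destruct H as [H|H] end;
    repeat match goal with H : _ /\ _ |- _ => destruct H as [? H] end; subst.
    all: solve [econstructor; eauto | apply g_copyH; auto | apply g_copyH_top; auto].
Qed.

Definition ind_gadget6 (t s m t' s' m' : nat) : nat :=
  ind_eq t 0 * ind_eq t' 0 * ind_eq s s' * ind_eq m m' * ind_in_tree aM s +
  ind_eq t 1 * ind_eq t' 1 * ind_eq s s' * ind_lt m m' * ind_in_tree aM s +
  ind_eq t 1 * ind_eq t' 0 * ind_eq s s' * ind_le m m' * ind_in_tree aM s +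
  ind_eq t 2 * ind_eq t' 2 * ind_eq m 0 * ind_eq m' 0 * ind_in_tree aM s' * ind_prefix_lt s s' +
  ind_eq t 2 * ind_eq t' 0 * ind_eq m 0 * ind_in_tree aM s' * ind_prefix_le s s' +
  ind_eq t 3 * ind_eq t' 3 * ind_eq s s' * ind_eq m 0 * ind_eq m' 0 * ind_in_tree aH s +
  (ind_eq t 4 + ind_eq t 5) * ind_eq t' t * ind_eq m 0 * ind_eq m' 0 * ind_in_tree aH s' *
    ind_prefix_lt s s' +
  (ind_eq t 4 + ind_eq t 5) * ind_eq t' 3 * ind_eq m 0 * ind_eq m' 0 * ind_in_tree aH s' *
    ind_prefix_le s s' +
  ind_eq t 6 * ind_eq t' 6 * ind_eq s s' * ind_eq m 0 * ind_eq m' 0 * ind_in_tree aF s +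
  ind_eq t 7 * ind_eq t' 7 * ind_eq m 0 * ind_eq m' 0 * ind_in_tree aF s' * ind_prefix_lt s s' +
  ind_eq t 7 * ind_eq t' 6 * ind_eq m 0 * ind_eq m' 0 * ind_in_tree aF s' * ind_prefix_le s s' +
  ind_eq t 7 * ind_eq t' 8 * ind_eq m 0 * ind_eq s' 0 * ind_eq m' 0 * ind_in_tree aF s +
  ind_eq t 8 * ind_eq s 0 * ind_eq m 0 * ind_eq t' 8 * ind_eq s' 0 * ind_eq m' 0.

Lemma ind_gadget6_ne t s m t' s' m' :
  ind_gadget6 t s m t' s' m' <> 0 <-> gadget_cases t s m t' s' m'.
Proof.
  unfold ind_gadget6, gadget_cases.
  rewrite !add_ne, !mul_ne, !add_ne, !ind_eq_ne, !ind_lt_ne, !ind_le_ne, !ind_in_tree_ne,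
    !ind_prefix_lt_ne, !ind_prefix_le_ne.
  tauto.
Qed.

Definition ind_gadget (x y : nat) : nat :=
  ind_gadget6 (tag x) (node x) (idx x) (tag y) (node y) (idx y).

Lemma ind_gadget_ne x y : ind_gadget x y <> 0 <-> gadget aM aH aF x y.
Proof. unfold ind_gadget. rewrite ind_gadget6_ne, gadget_iff_cases. reflexivity. Qed.

End GadgetIndicator.

(** * Total programs *)

Fixpoint eval_det c v y (H : eval c v y) {struct H} : forall y', eval c v y' -> y = y'
with evals_det gs v ys (H : evals gs v ys) {struct H} : forall ys', evals gs v ys' -> ys = ys'.
Proof.
  - destruct H; intros y' H'; inversion H'; subst; auto.
    + assert (ys = ys0) by (eapply evals_det; eauto). subst. eapply eval_det; eauto.
    + eapply eval_det; eauto.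
    + assert (z = z0) by (eapply eval_det; eauto). subst. eapply eval_det; eauto.
    + match goal with
      | Hf : forall m, m < y' -> exists k, eval _ (m :: _) (S k),
        Hf' : forall m, m < n -> exists k, eval _ (m :: _) (S k),
        H0 : eval _ (y' :: _) 0 |- _ =>
          destruct (Nat.lt_trichotomy n y') as [Hlt|[Heq|Hgt]]; auto; exfalso;
          [ destruct (Hf n Hlt) as [k Hk]; pose proof (eval_det _ _ _ H _ Hk)
          | destruct (Hf' y' Hgt) as [k Hk]; pose proof (eval_det _ _ _ Hk _ H0) ];
          discriminate
      end.
  - destruct H; intros ys' H'; inversion H'; subst; auto.
    f_equal; [eapply eval_det; eauto|eapply evals_det; eauto].
Qed.

Definition recf_ind_nested (P : recf -> Prop) (H0 : P RZero) (H1 : P RSucc)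
  (H2 : forall i, P (RProj i)) (H3 : forall f gs, P f -> Forall P gs -> P (RComp f gs))
  (H4 : forall f g, P f -> P g -> P (RPrec f g)) (H5 : forall f, P f -> P (RMin f)) :
  forall c, P c :=
  fix F c := match c with
  | RZero => H0 | RSucc => H1 | RProj i => H2 i
  | RComp f gs => H3 f gs (F f) ((fix G l : Forall P l := match l with
                                  | [] => Forall_nil P
                                  | g :: l' => Forall_cons g (F g) (G l') end) gs)
  | RPrec f g => H4 f g (F f) (F g)
  | RMin f => H5 f (F f) end.

Fixpoint enc_list (l : list recf) : nat :=
  match l with [] => 0 | g :: l' => S (cpair (enc g) (enc_list l')) end.

Lemma enc_comp f gs : enc (RComp f gs) = cpair 3 (cpair (enc f) (enc_list gs)).
Proof. reflexivity. Qed.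

Lemma enc_inj c1 c2 : enc c1 = enc c2 -> c1 = c2.
Proof.
  revert c2.
  induction c1 as [| |i|f gs IHf IHgs|f g IHf IHg|f IHf] using recf_ind_nested; intros c2 H;
  destruct c2 as [| |i'|f' gs'|f' g'|f']; try rewrite !enc_comp in H; cbn [enc] in H;
  try (apply cpair_inj in H as [H _]; discriminate H);
  apply cpair_inj in H as [_ H]; try (apply cpair_inj in H as [H1 H2]).
  - reflexivity.
  - reflexivity.
  - subst; reflexivity.
  - rewrite (IHf _ H1). f_equal. clear IHf H1.
    revert gs' H2. induction IHgs; intros gs' H2; destruct gs'; cbn [enc_list] in H2;
      try discriminate; [reflexivity|].
    injection H2 as H2. apply cpair_inj in H2 as [E1 E2]. f_equal; auto.
  - rewrite (IHf _ H1), (IHg _ H2). reflexivity.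
  - rewrite (IHf _ H). reflexivity.
Qed.

Lemma phi_enc c args y : phi (enc c) args y <-> eval c args y.
Proof.
  split; [intros [c' [E H]]; apply enc_inj in E; subst; exact H|intro H; exists c; auto].
Qed.

Lemma W_enc c x : W (enc c) x <-> exists y, eval c [x] y.
Proof. unfold W. setoid_rewrite phi_enc. reflexivity. Qed.

Record prog := mkP {
  code : recf;
  sem : list nat -> nat;
  code_sem : forall v, eval code v (sem v) }.

Definition p_proj (i : nat) : prog := mkP (RProj i) (fun v => nth i v 0) (fun v => ev_proj i v).
Definition p_zero : prog := mkP RZero (fun _ => 0) (fun v => ev_zero v).
Definition p_succ0 : prog := mkP RSucc (fun v => S (hd 0 v)) (fun v => ev_succ v).

Lemma evals_map (Gs : list prog) v : evals (map code Gs) v (map (fun G => sem G v) Gs).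
Proof. induction Gs; simpl; constructor; auto. apply code_sem. Qed.

Definition p_comp (F : prog) (Gs : list prog) : prog :=
  mkP (RComp (code F) (map code Gs)) (fun v => sem F (map (fun G => sem G v) Gs))
      (fun v => ev_comp _ _ _ _ _ (evals_map Gs v) (code_sem F _)).

Fixpoint prim_rec (F G : list nat -> nat) (n : nat) (w : list nat) : nat :=
  match n with 0 => F w | S n' => G (n' :: prim_rec F G n' w :: w) end.

Lemma eval_prim_rec (F G : prog) n w :
  eval (RPrec (code F) (code G)) (n :: w) (prim_rec (sem F) (sem G) n w).
Proof.
  induction n; simpl; [apply ev_prec0, code_sem|eapply ev_precS; [exact IHn|apply code_sem]].
Qed.

Lemma p_prec_spec (F G N : prog) (Ws : list prog) v :
  eval (RComp (RPrec (code F) (code G)) (code N :: map code Ws)) v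
       (prim_rec (sem F) (sem G) (sem N v) (map (fun W => sem W v) Ws)).
Proof. eapply ev_comp; [constructor; [apply code_sem|apply evals_map]|apply eval_prim_rec]. Qed.

(* [p_prec F G N Ws] runs the recursion [F], [G] for [N] steps, with parameters [Ws]. *)
Definition p_prec (F G N : prog) (Ws : list prog) : prog := mkP _ _ (p_prec_spec F G N Ws).

Definition app1 F A := p_comp F [A].
Definition app2 F A B := p_comp F [A; B].
Definition app3 F A B C := p_comp F [A; B; C].
Definition p_succ (A : prog) : prog := app1 p_succ0 A.
Fixpoint p_const (n : nat) : prog := match n with 0 => p_zero | S n => p_succ (p_const n) end.

Lemma sem_comp F Gs v : sem (p_comp F Gs) v = sem F (map (fun G => sem G v) Gs).
Proof. reflexivity. Qed.
Lemma sem_app1 F A v : sem (app1 F A) v = sem F [sem A v]. Proof. reflexivity. Qed.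
Lemma sem_app2 F A B v : sem (app2 F A B) v = sem F [sem A v; sem B v]. Proof. reflexivity. Qed.
Lemma sem_app3 F A B C v : sem (app3 F A B C) v = sem F [sem A v; sem B v; sem C v].
Proof. reflexivity. Qed.
Lemma sem_proj i v : sem (p_proj i) v = nth i v 0. Proof. reflexivity. Qed.
Lemma sem_zero v : sem p_zero v = 0. Proof. reflexivity. Qed.
Lemma sem_prec F G N Ws v :
  sem (p_prec F G N Ws) v = prim_rec (sem F) (sem G) (sem N v) (map (fun W => sem W v) Ws).
Proof. reflexivity. Qed.
Lemma sem_succ A v : sem (p_succ A) v = S (sem A v). Proof. reflexivity. Qed.
Lemma sem_const n v : sem (p_const n) v = n.
Proof. induction n; [reflexivity|]. cbn [p_const]. rewrite sem_succ, IHn. reflexivity. Qed.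

(* Keeping the combinators opaque stops [simpl] from unfolding whole programs. *)
Global Opaque app1 app2 app3 p_proj p_zero p_prec p_succ.

Create HintDb sem_db.
Hint Rewrite sem_app1 sem_app2 sem_app3 sem_proj sem_zero sem_prec sem_succ sem_const : sem_db.
Ltac sem_simpl := repeat progress (autorewrite with sem_db; cbn [nth map hd]).

Definition p_add : prog := p_prec (p_proj 0) (p_succ (p_proj 1)) (p_proj 0) [p_proj 1].

Lemma sem_add v : sem p_add v = nth 0 v 0 + nth 1 v 0.
Proof. unfold p_add. sem_simpl. induction (nth 0 v 0); simpl; sem_simpl; auto. Qed.

Definition p_mul : prog :=
  p_prec p_zero (app2 p_add (p_proj 1) (p_proj 2)) (p_proj 0) [p_proj 1].

Lemma sem_mul v : sem p_mul v = nth 0 v 0 * nth 1 v 0.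
Proof.
  unfold p_mul. sem_simpl. induction (nth 0 v 0) as [|n IHn]; simpl; sem_simpl; auto.
  rewrite sem_add. cbn [nth]. rewrite IHn. lia.
Qed.

Definition p_pred : prog := p_prec p_zero (p_proj 0) (p_proj 0) [].

Lemma sem_pred v : sem p_pred v = pred (nth 0 v 0).
Proof. unfold p_pred. sem_simpl. destruct (nth 0 v 0); reflexivity. Qed.

Definition p_sub : prog := p_prec (p_proj 0) (app1 p_pred (p_proj 1)) (p_proj 1) [p_proj 0].

Lemma sem_sub v : sem p_sub v = nth 0 v 0 - nth 1 v 0.
Proof.
  unfold p_sub. sem_simpl. induction (nth 1 v 0) as [|n IHn]; simpl; sem_simpl; [lia|].
  rewrite sem_pred. cbn [nth]. rewrite IHn. lia.
Qed.

Definition p_cond : prog := p_prec (p_proj 1) (p_proj 2) (p_proj 0) [p_proj 1; p_proj 2].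

Lemma sem_cond v : sem p_cond v = match nth 0 v 0 with 0 => nth 2 v 0 | _ => nth 1 v 0 end.
Proof. unfold p_cond. sem_simpl. destruct (nth 0 v 0); reflexivity. Qed.

Global Opaque p_add p_mul p_pred p_sub p_cond.
Hint Rewrite sem_add sem_mul sem_pred sem_sub sem_cond : sem_db.

Definition p_sg (A : prog) : prog := app2 p_sub (p_const 1) (app2 p_sub (p_const 1) A).

Definition p_ind_eq : prog :=
  app2 p_sub (p_const 1)
    (app2 p_add (app2 p_sub (p_proj 0) (p_proj 1)) (app2 p_sub (p_proj 1) (p_proj 0))).

Definition p_ind_lt : prog := p_sg (app2 p_sub (p_proj 1) (p_proj 0)).

Definition p_ind_le : prog := app2 p_sub (p_const 1) (app2 p_sub (p_proj 0) (p_proj 1)).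

Lemma sem_sg A v : sem (p_sg A) v = 1 - (1 - sem A v).
Proof. unfold p_sg. sem_simpl. reflexivity. Qed.

Lemma sem_ind_eq v : sem p_ind_eq v = ind_eq (nth 0 v 0) (nth 1 v 0).
Proof. unfold p_ind_eq. sem_simpl. reflexivity. Qed.

Lemma sem_ind_lt v : sem p_ind_lt v = ind_lt (nth 0 v 0) (nth 1 v 0).
Proof. unfold p_ind_lt. rewrite sem_sg. sem_simpl. reflexivity. Qed.

Lemma sem_ind_le v : sem p_ind_le v = ind_le (nth 0 v 0) (nth 1 v 0).
Proof. unfold p_ind_le. sem_simpl. reflexivity. Qed.

Global Opaque p_sg p_ind_eq p_ind_lt p_ind_le.
Hint Rewrite sem_sg sem_ind_eq sem_ind_lt sem_ind_le : sem_db.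

Definition p_triangular : prog :=
  p_prec p_zero (app2 p_add (p_proj 1) (p_succ (p_proj 0))) (p_proj 0) [].

Lemma sem_triangular v : sem p_triangular v = triangular (nth 0 v 0).
Proof.
  unfold p_triangular. sem_simpl.
  induction (nth 0 v 0) as [|n IHn]; simpl; sem_simpl; [reflexivity|]. rewrite IHn. lia.
Qed.

Definition p_cpair : prog :=
  app2 p_add (app1 p_triangular (app2 p_add (p_proj 0) (p_proj 1))) (p_proj 1).

Lemma sem_cpair v : sem p_cpair v = cpair (nth 0 v 0) (nth 1 v 0).
Proof. unfold p_cpair. sem_simpl. rewrite sem_triangular, cpair_triangular. reflexivity. Qed.

Definition p_cdiag : prog :=
  p_prec p_zero
    (app3 p_cond (app2 p_ind_le (app1 p_triangular (p_succ (p_proj 1))) (p_succ (p_proj 0)))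
       (p_succ (p_proj 1)) (p_proj 1))
    (p_proj 0) [].

Lemma sem_cdiag v : sem p_cdiag v = cdiag (nth 0 v 0).
Proof.
  unfold p_cdiag. sem_simpl. induction (nth 0 v 0) as [|n IHn]; simpl; sem_simpl; auto.
  rewrite IHn, sem_triangular. unfold ind_le. simpl triangular.
  destruct (Nat.leb_spec (triangular (cdiag n) + S (cdiag n)) (S n)).
  - replace (triangular (cdiag n) + S (cdiag n) - S n) with 0 by lia. reflexivity.
  - replace (1 - (triangular (cdiag n) + S (cdiag n) - S n)) with 0 by lia. reflexivity.
Qed.

Global Opaque p_triangular p_cpair p_cdiag.
Hint Rewrite sem_triangular sem_cpair sem_cdiag : sem_db.

Definition p_csnd : prog := app2 p_sub (p_proj 0) (app1 p_triangular (app1 p_cdiag (p_proj 0))).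

Lemma sem_csnd v : sem p_csnd v = csnd (nth 0 v 0).
Proof. unfold p_csnd. sem_simpl. reflexivity. Qed.

Definition p_cfst : prog := app2 p_sub (app1 p_cdiag (p_proj 0)) (app1 p_csnd (p_proj 0)).

Lemma sem_cfst v : sem p_cfst v = cfst (nth 0 v 0).
Proof. unfold p_cfst. sem_simpl. rewrite sem_csnd. reflexivity. Qed.

Global Opaque p_csnd p_cfst.
Hint Rewrite sem_csnd sem_cfst : sem_db.

Definition p_parent : prog := app1 p_csnd (app1 p_pred (p_proj 0)).

Lemma sem_parent v : sem p_parent v = parent (nth 0 v 0).
Proof. unfold p_parent. sem_simpl. reflexivity. Qed.

Definition p_last_label : prog := app1 p_cfst (app1 p_pred (p_proj 0)).

Lemma sem_last_label v : sem p_last_label v = last_label (nth 0 v 0).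
Proof. unfold p_last_label. sem_simpl. reflexivity. Qed.

Global Opaque p_parent p_last_label.
Hint Rewrite sem_parent sem_last_label : sem_db.

Definition p_iter_parent : prog :=
  p_prec (p_proj 0) (app1 p_parent (p_proj 1)) (p_proj 0) [p_proj 1].

Lemma sem_iter_parent v : sem p_iter_parent v = iter_parent (nth 0 v 0) (nth 1 v 0).
Proof.
  unfold p_iter_parent, iter_parent. sem_simpl.
  induction (nth 0 v 0) as [|n IHn]; simpl; sem_simpl; [reflexivity|]. rewrite IHn. reflexivity.
Qed.

Definition p_rev_step : prog :=
  app3 p_cond (app2 p_ind_eq (app1 p_cfst (p_proj 0)) (p_const 0)) (p_proj 0)
    (app2 p_cpair (app1 p_parent (app1 p_cfst (p_proj 0)))
       (p_succ (app2 p_cpair (app1 p_last_label (app1 p_cfst (p_proj 0)))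
                             (app1 p_csnd (p_proj 0))))).

Lemma sem_rev_step v : sem p_rev_step v = rev_step (nth 0 v 0).
Proof.
  unfold p_rev_step, rev_step. sem_simpl. unfold ind_eq. destruct (cfst (nth 0 v 0)); reflexivity.
Qed.

Global Opaque p_iter_parent p_rev_step.
Hint Rewrite sem_iter_parent sem_rev_step : sem_db.

Definition p_rev_code : prog :=
  app1 p_csnd
    (p_prec (p_proj 0) (app1 p_rev_step (p_proj 1)) (p_proj 0) [app2 p_cpair (p_proj 0) p_zero]).

Lemma sem_rev_code v : sem p_rev_code v = rev_code (nth 0 v 0).
Proof.
  unfold p_rev_code, rev_code. sem_simpl. f_equal.
  generalize (cpair (nth 0 v 0) 0) as z.
  induction (nth 0 v 0) as [|n IHn]; intro z; simpl; sem_simpl; [reflexivity|].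
  rewrite IHn. reflexivity.
Qed.

(* [p_in_tree P] decides, on input [t; p], whether [t] lies in the tree of
   [fun s => sem P [p; s]]. *)
Definition p_in_tree (P : prog) : prog :=
  p_prec (p_const 1)
    (app2 p_mul (p_proj 1)
       (p_sg (app2 P (p_proj 3) (app1 p_rev_code (app2 p_iter_parent (p_proj 0) (p_proj 2))))))
    (p_succ (p_proj 0)) [p_proj 0; p_proj 1].

Lemma sem_in_tree P v :
  sem (p_in_tree P) v = ind_in_tree (fun s => sem P [nth 1 v 0; s]) (nth 0 v 0).
Proof.
  unfold p_in_tree, ind_in_tree. sem_simpl.
  induction (S (nth 0 v 0)) as [|n IHn]; cbn [prim_rec prod_below]; sem_simpl; [reflexivity|].
  rewrite IHn, sem_rev_code. reflexivity.
Qed.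

Definition p_prefix_le : prog :=
  app2 p_sub (p_const 1)
    (p_prec (p_const 1)
       (app2 p_mul (p_proj 1)
          (app2 p_sub (p_const 1)
             (app2 p_ind_eq (app2 p_iter_parent (p_proj 0) (p_proj 3)) (p_proj 2))))
       (p_succ (p_proj 1)) [p_proj 0; p_proj 1]).

Lemma sem_prefix_le v : sem p_prefix_le v = ind_prefix_le (nth 0 v 0) (nth 1 v 0).
Proof.
  unfold p_prefix_le, ind_prefix_le. sem_simpl. f_equal.
  induction (S (nth 1 v 0)) as [|n IHn]; cbn [prim_rec prod_below]; sem_simpl; [reflexivity|].
  rewrite IHn. reflexivity.
Qed.

Definition p_prefix_lt : prog :=
  app2 p_mul (p_sg (p_proj 1)) (app2 p_prefix_le (p_proj 0) (app1 p_parent (p_proj 1))).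

Lemma sem_prefix_lt v : sem p_prefix_lt v = ind_prefix_lt (nth 0 v 0) (nth 1 v 0).
Proof. unfold p_prefix_lt, ind_prefix_lt. sem_simpl. rewrite sem_prefix_le. reflexivity. Qed.

Global Opaque p_rev_code p_in_tree p_prefix_le p_prefix_lt.
Hint Rewrite sem_rev_code sem_in_tree sem_prefix_le sem_prefix_lt : sem_db.


Inductive expr : Type :=
| EVar (i : nat) | EConst (n : nat) | EAdd (a b : expr) | EMul (a b : expr)
| EEq (a b : expr) | ELt (a b : expr) | ELe (a b : expr)
| EPrefixLt (a b : expr) | EPrefixLe (a b : expr) | EInTree (P : prog) (t p : expr).

Fixpoint expr_sem (v : list nat) (e : expr) : nat :=
  match e with
  | EVar i => nth i v 0
  | EConst n => n
  | EAdd a b => expr_sem v a + expr_sem v b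
  | EMul a b => expr_sem v a * expr_sem v b
  | EEq a b => ind_eq (expr_sem v a) (expr_sem v b)
  | ELt a b => ind_lt (expr_sem v a) (expr_sem v b)
  | ELe a b => ind_le (expr_sem v a) (expr_sem v b)
  | EPrefixLt a b => ind_prefix_lt (expr_sem v a) (expr_sem v b)
  | EPrefixLe a b => ind_prefix_le (expr_sem v a) (expr_sem v b)
  | EInTree P t p => ind_in_tree (fun s => sem P [expr_sem v p; s]) (expr_sem v t)
  end.

Fixpoint compile (e : expr) : prog :=
  match e with
  | EVar i => p_proj i
  | EConst n => p_const n
  | EAdd a b => app2 p_add (compile a) (compile b)
  | EMul a b => app2 p_mul (compile a) (compile b)
  | EEq a b => app2 p_ind_eq (compile a) (compile b)
  | ELt a b => app2 p_ind_lt (compile a) (compile b)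
  | ELe a b => app2 p_ind_le (compile a) (compile b)
  | EPrefixLt a b => app2 p_prefix_lt (compile a) (compile b)
  | EPrefixLe a b => app2 p_prefix_le (compile a) (compile b)
  | EInTree P t p => app2 (p_in_tree P) (compile t) (compile p)
  end.

Lemma sem_compile e v : sem (compile e) v = expr_sem v e.
Proof. induction e; cbn [compile expr_sem]; sem_simpl; rewrite ?IHe1, ?IHe2; auto. Qed.

Definition products (a : expr) (l : list expr) : expr := fold_left EMul l a.
Definition sums (a : expr) (l : list expr) : expr := fold_left EAdd l a.

Definition matrix_at (P : prog) (p : nat) (s : nat) : nat := sem P [p; s].

Definition gadget_expr (PM PH PF : prog) : expr :=
  let t := EVar 0 in let s := EVar 1 in let m := EVar 2 in
  let t' := EVar 3 in let s' := EVar 4 in let m' := EVar 5 in let p := EVar 6 in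
  let z := EConst 0 in
  sums (products (EEq t z) [EEq t' z; EEq s s'; EEq m m'; EInTree PM s p])
  [ products (EEq t (EConst 1)) [EEq t' (EConst 1); EEq s s'; ELt m m'; EInTree PM s p];
    products (EEq t (EConst 1)) [EEq t' z; EEq s s'; ELe m m'; EInTree PM s p];
    products (EEq t (EConst 2))
      [EEq t' (EConst 2); EEq m z; EEq m' z; EInTree PM s' p; EPrefixLt s s'];
    products (EEq t (EConst 2)) [EEq t' z; EEq m z; EInTree PM s' p; EPrefixLe s s'];
    products (EEq t (EConst 3)) [EEq t' (EConst 3); EEq s s'; EEq m z; EEq m' z; EInTree PH s p];
    products (EAdd (EEq t (EConst 4)) (EEq t (EConst 5)))
      [EEq t' t; EEq m z; EEq m' z; EInTree PH s' p; EPrefixLt s s'];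
    products (EAdd (EEq t (EConst 4)) (EEq t (EConst 5)))
      [EEq t' (EConst 3); EEq m z; EEq m' z; EInTree PH s' p; EPrefixLe s s'];
    products (EEq t (EConst 6)) [EEq t' (EConst 6); EEq s s'; EEq m z; EEq m' z; EInTree PF s p];
    products (EEq t (EConst 7))
      [EEq t' (EConst 7); EEq m z; EEq m' z; EInTree PF s' p; EPrefixLt s s'];
    products (EEq t (EConst 7))
      [EEq t' (EConst 6); EEq m z; EEq m' z; EInTree PF s' p; EPrefixLe s s'];
    products (EEq t (EConst 7)) [EEq t' (EConst 8); EEq m z; EEq s' z; EEq m' z; EInTree PF s p];
    products (EEq t (EConst 8)) [EEq s z; EEq m z; EEq t' (EConst 8); EEq s' z; EEq m' z] ].

Lemma expr_sem_gadget PM PH PF t s m t' s' m' p :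
  expr_sem [t; s; m; t'; s'; m'; p] (gadget_expr PM PH PF) =
  ind_gadget6 (matrix_at PM p) (matrix_at PH p) (matrix_at PF p) t s m t' s' m'.
Proof. reflexivity. Qed.

Section Codes.

Variables PM PH PF : prog.

Definition gadget_at (p : nat) : nat -> nat -> Prop :=
  gadget (matrix_at PM p) (matrix_at PH p) (matrix_at PF p).

Definition p_tag (A : prog) : prog := app1 p_cfst A.
Definition p_node (A : prog) : prog := app1 p_cfst (app1 p_csnd A).
Definition p_idx (A : prog) : prog := app1 p_csnd (app1 p_csnd A).

Definition p_gadget : prog :=
  p_comp (compile (gadget_expr PM PH PF))
    [p_tag (p_proj 0); p_node (p_proj 0); p_idx (p_proj 0);
     p_tag (p_proj 1); p_node (p_proj 1); p_idx (p_proj 1); p_proj 2].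

Lemma sem_gadget x y p : sem p_gadget [x; y; p] <> 0 <-> gadget_at p x y.
Proof.
  unfold p_gadget, p_tag, p_node, p_idx. rewrite sem_comp. cbn [map].
  rewrite sem_compile. sem_simpl. rewrite expr_sem_gadget. apply ind_gadget_ne.
Qed.

Definition p_not (A : prog) : prog := app2 p_sub (p_const 1) A.

Lemma sem_not A v : sem (p_not A) v = 1 - sem A v.
Proof. unfold p_not. sem_simpl. reflexivity. Qed.

Lemma min_halts (P : prog) v :
  (exists y, eval (RMin (code P)) v y) <-> exists n, sem P (n :: v) = 0.
Proof.
  split.
  - intros [y Hy]. inversion Hy; subst. exists y. eapply eval_det; [apply code_sem|eauto].
  - intro Hn. destruct (ex_least _ Hn) as [n [H0 Hmin]]. exists n. apply ev_min.
    + rewrite <- H0. apply code_sem.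
    + intros m Hm. exists (pred (sem P (m :: v))).
      replace (S (pred (sem P (m :: v)))) with (sem P (m :: v)) by (specialize (Hmin m Hm); lia).
      apply code_sem.
Qed.

(* On input [z; p], halts iff [gadget_at p (cfst z) (csnd z)]; the search variable is idle. *)
Definition code_V : recf :=
  RMin (code (p_not (p_comp p_gadget [app1 p_cfst (p_proj 1); app1 p_csnd (p_proj 1); p_proj 2]))).

(* On input [k; p], halts iff some [y] has [gadget_at p k y]. *)
Definition code_nonempty : recf :=
  RMin (code (p_not (p_comp p_gadget [p_proj 1; p_proj 0; p_proj 2]))).

Lemma code_V_halts z p : (exists y, eval code_V [z; p] y) <-> gadget_at p (cfst z) (csnd z).
Proof.
  unfold code_V. rewrite min_halts, <- sem_gadget.
  enough (E : forall n,
    sem (p_not (p_comp p_gadget [app1 p_cfst (p_proj 1); app1 p_csnd (p_proj 1); p_proj 2]))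
      [n; z; p] = 1 - sem p_gadget [cfst z; csnd z; p]).
  { setoid_rewrite E. split; [intros [n Hn]; lia|intro H; exists 0; lia]. }
  intro n. rewrite sem_not, sem_comp. cbn [map]. sem_simpl. reflexivity.
Qed.

Lemma code_nonempty_halts k p :
  (exists y, eval code_nonempty [k; p] y) <-> exists y, gadget_at p k y.
Proof.
  unfold code_nonempty. rewrite min_halts. setoid_rewrite <- sem_gadget.
  enough (E : forall n, sem (p_not (p_comp p_gadget [p_proj 1; p_proj 0; p_proj 2])) [n; k; p]
                = 1 - sem p_gadget [k; n; p]).
  { setoid_rewrite E. split; intros [n Hn]; exists n; lia. }
  intro n. rewrite sem_not, sem_comp. cbn [map]. sem_simpl. reflexivity.
Qed.

End Codes.

(** * The computable index *)

Fixpoint const_code (p : nat) : recf :=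
  match p with 0 => RZero | S p => RComp RSucc [const_code p] end.

Lemma eval_const_code p v : eval (const_code p) v p.
Proof.
  induction p as [|p IH] in v |- *; [apply ev_zero|].
  eapply ev_comp; [constructor; [apply IH|constructor]|]. apply (ev_succ [p]).
Qed.

Definition with_param (c : recf) (p : nat) : recf := RComp c [RProj 0; const_code p].

Lemma eval_with_param c p x y : eval (with_param c p) [x] y <-> eval c [x; p] y.
Proof.
  assert (E : evals [RProj 0; const_code p] [x] [x; p])
    by (constructor; [apply (ev_proj 0 [x])|constructor; [apply eval_const_code|constructor]]).
  split.
  - intro H. inversion H as [| | |? ? ? ys ? Hys Hc| | |]; subst.
    rewrite (evals_det _ _ _ Hys _ E) in Hc. exact Hc.
  - intro H. exact (ev_comp _ _ _ _ _ E H).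
Qed.

Lemma W_with_param c p x : W (enc (with_param c p)) x <-> exists y, eval c [x; p] y.
Proof. rewrite W_enc. setoid_rewrite eval_with_param. reflexivity. Qed.

Fixpoint p_quote (c : recf) : prog :=
  match c with
  | RZero => app2 p_cpair (p_const 0) (p_const 0)
  | RSucc => app2 p_cpair (p_const 1) (p_const 0)
  | RProj i => app2 p_cpair (p_const 2) (p_const i)
  | RComp f gs => app2 p_cpair (p_const 3) (app2 p_cpair (p_quote f)
      ((fix quote_list (l : list recf) : prog := match l with
         | [] => p_zero
         | g :: l' => p_succ (app2 p_cpair (p_quote g) (quote_list l')) end) gs))
  | RPrec f g => app2 p_cpair (p_const 4) (app2 p_cpair (p_quote f) (p_quote g))
  | RMin f => app2 p_cpair (p_const 5) (p_quote f)
  end.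

Lemma sem_quote c v : sem (p_quote c) v = enc c.
Proof.
  induction c as [| |i|f gs IHf IHgs|f g IHf IHg|f IHf] using recf_ind_nested;
    cbn [p_quote]; sem_simpl; auto.
  - rewrite enc_comp, IHf. do 2 f_equal.
    induction IHgs as [|g gs Hg _ IH]; cbn [enc_list]; sem_simpl; congruence.
  - cbn [enc]. rewrite IHf, IHg. reflexivity.
  - cbn [enc]. rewrite IHf. reflexivity.
Qed.

Definition p_enc_const_code : prog :=
  p_prec (p_quote RZero)
    (app2 p_cpair (p_const 3)
       (app2 p_cpair (p_quote RSucc) (p_succ (app2 p_cpair (p_proj 1) p_zero))))
    (p_proj 0) [].

Lemma sem_enc_const_code v : sem p_enc_const_code v = enc (const_code (nth 0 v 0)).
Proof.
  unfold p_enc_const_code. sem_simpl. generalize (nth 0 v 0) as n.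
  induction n; cbn [prim_rec]; rewrite ?sem_quote; auto.
  sem_simpl. rewrite IHn, sem_quote. reflexivity.
Qed.

Definition p_with_param (c : recf) : prog :=
  app2 p_cpair (p_const 3) (app2 p_cpair (p_quote c)
     (p_succ (app2 p_cpair (p_quote (RProj 0)) (p_succ (app2 p_cpair p_enc_const_code p_zero))))).

Lemma with_param_computable c : computable (fun p => enc (with_param c p)).
Proof.
  exists (enc (code (p_with_param c))). intro p. apply phi_enc.
  replace (enc (with_param c p)) with (sem (p_with_param c) [p]); [apply code_sem|].
  unfold p_with_param, with_param. rewrite enc_comp. cbn [enc_list].
  sem_simpl. rewrite !sem_quote, sem_enc_const_code. reflexivity.
Qed.

Definition prog_of_total2 (c : recf) (f : nat -> nat -> nat)
  (Hc : forall x y, eval c [x; y] (f x y)) : prog :=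
  mkP (RComp c [RProj 0; RProj 1]) (fun v => f (nth 0 v 0) (nth 1 v 0))
      (fun v => ev_comp _ _ _ _ _
         (evs_cons _ _ _ _ _ (ev_proj 0 v) (evs_cons _ _ _ _ _ (ev_proj 1 v) (evs_nil v)))
         (Hc _ _)).

Lemma Pi11_no_path A : Pi11 A -> exists P : prog, forall p, A p <-> no_path (matrix_at P p).
Proof.
  intros [e [Htot Hchar]].
  destruct (Htot 0 0) as [b [c [<- _]]].
  setoid_rewrite phi_enc in Htot. setoid_rewrite phi_enc in Hchar.
  destruct (choice (fun xy b => eval c [fst xy; snd xy] b) (fun xy => Htot (fst xy) (snd xy)))
    as [f Hf].
  set (P := prog_of_total2 c (fun x y => f (x, y)) (fun x y => Hf (x, y))).
  exists P. intro p. rewrite Hchar, <- kleene_wf_iff_no_path.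
  unfold kleene_wf, matrix_at. cbn.
  split; intros Hp g; destruct (Hp g) as [n Hn]; exists n.
  - exact (eval_det _ _ _ (Hf (p, _)) _ Hn).
  - rewrite <- Hn. exact (Hf (p, _)).
Qed.

Lemma clos_trans_of_transitive (R : nat -> nat -> Prop) :
  transitive nat R -> forall x y, clos_trans nat R x y <-> R x y.
Proof.
  intros Ht x y. split; [induction 1; eauto|apply t_step].
Qed.

Section Index.

Variables PM PH PF : prog.

Definition g_index (p : nat) : nat := enc (with_param (code_V PM PH PF) p).

Lemma V_g_index p a b : V (g_index p) a b <-> gadget_at PM PH PF p a b.
Proof.
  unfold V, g_index. rewrite W_with_param, code_V_halts, cfst_cpair, csnd_cpair. reflexivity.
Qed.

Lemma iota_g_index p : iota (g_index p) = gadget_at PM PH PF p.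
Proof.
  apply functional_extensionality; intro i. apply functional_extensionality; intro j.
  apply propositional_extensionality. unfold iota, Vt.
  rewrite <- (clos_trans_of_transitive (gadget_at PM PH PF p) (gadget_trans _ _ _) i j).
  split; induction 1; solve [apply t_step, V_g_index; auto | eapply t_trans; eauto].
Qed.

Lemma gadget_at_ce p : ce_space (gadget_at PM PH PF p).
Proof.
  exists (enc (with_param (code_nonempty PM PH PF) p)). intro k.
  rewrite W_with_param, code_nonempty_halts. unfold gadget_at. rewrite gadget_basic_nonempty.
  reflexivity.
Qed.

End Index.

Theorem theorem26 (M H F : nat -> Prop) :
  Pi11 M -> Pi11 H -> Pi11 F ->
  (forall p, M p -> H p) -> (forall p, H p -> F p) ->
  exists g : nat -> nat, computable g /\
    forall p,
      ce_space (iota (g p)) /\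
      (M p -> metrizable (iota (g p))) /\
      (H p /\ ~ M p -> Hausdorff (iota (g p)) /\ ~ metrizable (iota (g p))) /\
      (F p /\ ~ H p -> T1 (iota (g p)) /\ ~ Hausdorff (iota (g p))) /\
      (~ F p -> ~ T1 (iota (g p))).
Proof.
  intros HM HH HF HMH HHF.
  destruct (Pi11_no_path M HM) as [PM EM].
  destruct (Pi11_no_path H HH) as [PH EH].
  destruct (Pi11_no_path F HF) as [PF EF].
  exists (g_index PM PH PF). split; [apply with_param_computable|]. intro p.
  rewrite iota_g_index. unfold gadget_at.
  specialize (HMH p). specialize (HHF p). rewrite EM, EH, EF in *.
  split; [apply gadget_at_ce|]. split; [|split; [|split]].
  - intro. apply gadget_metrizable; tauto.
  - intro. split; [apply gadget_Hausdorff|apply gadget_not_metrizable]; tauto.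
  - intro. split; [apply gadget_T1|apply gadget_not_Hausdorff]; tauto.
  - apply gadget_not_T1.
Qed.
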